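(* $\mu$-almost surely, for every $m\in\mathbb Z$ the value $\phi(m)$ is finite; that is, almost surely every burger is eventually consumed by some order and every order consumes some earlier burger.
   Context: Fix an integer $k\ge 2$ and $p\in[0,1]$. Let $\Theta=\{b_1,\dots,b_k,o_1,\dots,o_k,F\}$, where $b_i$ is a burger of type $i$, $o_i$ is an order of type $i$, and $F$ is a flexible order. Words in $\Theta$ are considered modulo the relations $b_io_i=b_iF=\varnothing$ and $b_io_j=o_jb_i$ for $i\ne j$. Concretely, reading a word left to right, each $o_i$ consumes the most recent not-yet-consumed $b_i$ to its left, and each $F$ consumes the most recent not-yet-consumed burger of any type to its left. Let $(X(n))_{n\in\mathbb Z}$ be i.i.d. $\Theta$-valued random variables with $\mathbb P(X(n)=b_i)=\frac1{2k}$, $\mathbb P(X(n)=o_i)=\frac{1-p}{2k}$ for each $i$, and $\mathbb P(X(n)=F)=\frac p2$; let $\mu$ denote their law on $\Theta^{\mathbb Z}$. If the burger $X(m)$ is consumed by the order $X(n)$ (with $m<n$), set $\phi(m)=n$ and $\phi(n)=m$. If a burger $X(m)$ is never consumed, set $\phi(m)=\infty$. If an order $X(n)$ consumes no burger, set $\phi(n)=-\infty$. *)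

From Stdlib Require Import Reals ZArith List.
Import ListNotations.
Open Scope R_scope.

(* The alphabet Theta.  Burger i / Order i for burger/order of type i
   (only 0 <= i < k are relevant; others get probability 0), Flex = F. *)
Inductive theta : Type :=
| Burger : nat -> theta
| Order  : nat -> theta
| Flex   : theta.

Definition law (k : nat) (p : R) (c : theta) : R :=
  match c with
  | Burger i => if Nat.ltb i k then / (2 * INR k) else 0
  | Order i  => if Nat.ltb i k then (1 - p) / (2 * INR k) else 0
  | Flex     => p / 2
  end.

(* ---- The burger matching (stack algorithm on a finite word) ----
   A stack is a list of (position, type) of not-yet-consumed burgers,
   most recent first. *)
Fixpoint remove_first_type (i : nat) (st : list (Z * nat))
  : option (Z * list (Z * nat)) :=
  match st with
  | [] => None
  | (j, t) :: st' =>
      if Nat.eqb t i then Some (j, st')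
      else match remove_first_type i st' with
           | Some (j', st'') => Some (j', (j, t) :: st'')
           | None => None
           end
  end.

Definition consume (c : theta) (st : list (Z * nat))
  : option (Z * list (Z * nat)) :=
  match c with
  | Burger _ => None
  | Order i => remove_first_type i st
  | Flex => match st with
            | [] => None
            | (j, _) :: st' => Some (j, st')
            end
  end.

Definition step (st : list (Z * nat)) (jc : Z * theta) : list (Z * nat) :=
  let (j, c) := jc in
  match c with
  | Burger i => (j, i) :: st
  | _ => match consume c st with
         | Some (_, st') => st'
         | None => st
         end
  end.

Definition positions (m n : Z) : list Z :=
  map (fun i => (m + Z.of_nat i)%Z) (seq 0 (Z.to_nat (n - m))).

Definition stack_between (x : Z -> theta) (m n : Z) : list (Z * nat) :=
  fold_left step (map (fun j => (j, x j)) (positions m n)) [].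

(* [matched x m n]: the order X(n) consumes the burger X(m), i.e.
   phi(m) = n and phi(n) = m.  Whether this happens in the bi-infinite word
   depends only on the finite segment x(m..n), and is computed by running
   the stack algorithm on that segment. *)
Definition matched (x : Z -> theta) (m n : Z) : Prop :=
  (m < n)%Z /\
  match consume (x n) (stack_between x m n) with
  | Some (j, _) => j = m
  | None => False
  end.

Definition phi_finite (x : Z -> theta) (m : Z) : Prop :=
  exists n : Z, matched x m n \/ matched x n m.

Definition is_probability_space (Omega : Type)
  (meas : (Omega -> Prop) -> Prop) (P : (Omega -> Prop) -> R) : Prop :=
  meas (fun _ => True) /\
  (forall A, meas A -> meas (fun w => ~ A w)) /\
  (forall E : nat -> Omega -> Prop,
      (forall n, meas (E n)) -> meas (fun w => exists n, E n w)) /\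
  (forall A, meas A -> 0 <= P A) /\
  P (fun _ => True) = 1 /\
  (forall E : nat -> Omega -> Prop,
      (forall n, meas (E n)) ->
      (forall i j w, i <> j -> E i w -> E j w -> False) ->
      infinite_sum (fun n => P (E n)) (P (fun w => exists n, E n w))).

Definition iid_with_law (Omega : Type)
  (meas : (Omega -> Prop) -> Prop) (P : (Omega -> Prop) -> R)
  (X : Z -> Omega -> theta) (k : nat) (p : R) : Prop :=
  (forall n c, meas (fun w => X n w = c)) /\
  (forall (ns : list Z) (cs : list theta),
      NoDup ns -> length ns = length cs ->
      P (fun w => Forall2 (fun n c => X n w = c) ns cs)
      = fold_right Rmult 1 (map (law k p) cs)).

From Pilot Require Import Defs.
From Stdlib Require Import Reals ZArith List Lia Lra Permutation FinFun Classical
  FunctionalExtensionality PropExtensionality Wf_nat.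
Import ListNotations.
Open Scope R_scope.

(* For a finite word w let U(w) be the number of burgers that remain unconsumed
   when w is read on its own, and V(w) the number of orders that find nothing to
   consume.  Burgers and orders are equally likely, so E U(w) = E V(w) for a
   random word.  When a word of length 2N is cut into two halves u v, every
   burger left in u that is eaten by a failing order of v (a flexible order, or
   an order of a type j still present in u) lowers U(uv) below U(u) + U(v).  If
   E U were at least eps N, then either flexible failures or the failures of
   some fixed type j (whose expected number of leftover burgers is E U / k by
   symmetry of the types) would be of order N with probability bounded below in
   both halves; by independence of the halves this gives
   E U_{2N} <= 2 E U_N - kappa N, which iterated along N = 2^i forces E U < 0.
   Hence E U_N = o(N).  The increment E U_{N+1} - E U_N is the probability that
   the first letter is a burger still unconsumed N letters later, and likewise
   the increment of E V_N is the probability that the last letter is an order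
   finding nothing among the N letters before it; both are therefore small for
   some N.  By stationarity, the probability that phi(m) is infinite is below
   every eps > 0, and a countable union over m concludes. *)

Definition lsum {A} (f : A -> R) (l : list A) : R :=
  fold_right (fun x acc => f x + acc) 0 l.

Lemma lsum_app {A} (f : A -> R) l1 l2 : lsum f (l1 ++ l2) = lsum f l1 + lsum f l2.
Proof. induction l1; simpl; [lra|rewrite IHl1; lra]. Qed.

Lemma lsum_map {A B} (f : B -> R) (g : A -> B) l : lsum f (map g l) = lsum (fun x => f (g x)) l.
Proof. induction l; simpl; auto. rewrite IHl; auto. Qed.

Lemma lsum_ext_in {A} (f g : A -> R) l : (forall x, In x l -> f x = g x) -> lsum f l = lsum g l.
Proof. induction l; simpl; intros H; auto. rewrite H, IHl; auto. Qed.

Lemma lsum_le_in {A} (f g : A -> R) l : (forall x, In x l -> f x <= g x) -> lsum f l <= lsum g l.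
Proof.
  induction l; simpl; intros H; [lra|].
  pose proof (H a (or_introl eq_refl)). pose proof (IHl (fun x h => H x (or_intror h))). lra.
Qed.

Lemma lsum_plus {A} (f g : A -> R) l : lsum (fun x => f x + g x) l = lsum f l + lsum g l.
Proof. induction l; simpl; [lra|rewrite IHl; lra]. Qed.

Lemma lsum_scal {A} (a : R) (f : A -> R) l : lsum (fun x => a * f x) l = a * lsum f l.
Proof. induction l; simpl; [lra|rewrite IHl; lra]. Qed.

Lemma lsum_const_seq (a : R) n m : lsum (fun _ => a) (seq m n) = INR n * a.
Proof.
  revert m; induction n; intros m; [simpl; lra|].
  change (lsum (fun _ => a) (seq m (S n))) with (a + lsum (fun _ => a) (seq (S m) n)).
  rewrite IHn, S_INR; lra.
Qed.

Lemma lsum_perm {A} (f : A -> R) l l' : Permutation l l' -> lsum f l = lsum f l'.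
Proof. induction 1; simpl; lra. Qed.

Definition alphabet (k : nat) : list theta :=
  map Burger (seq 0 k) ++ map Order (seq 0 k) ++ [Flex].

Definition over_alphabet k (w : list theta) := Forall (fun c => In c (alphabet k)) w.

Lemma lsum_alphabet k (h : theta -> R) :
  lsum h (alphabet k)
  = lsum (fun i => h (Burger i)) (seq 0 k) + lsum (fun i => h (Order i)) (seq 0 k) + h Flex.
Proof. unfold alphabet. rewrite !lsum_app, !lsum_map. simpl. lra. Qed.

Lemma NoDup_alphabet k : NoDup (alphabet k).
Proof.
  unfold alphabet. apply NoDup_app.
  - apply Injective_map_NoDup; [intros x y H; inversion H; auto|apply seq_NoDup].
  - apply NoDup_app.
    + apply Injective_map_NoDup; [intros x y H; inversion H; auto|apply seq_NoDup].
    + constructor; [simpl; tauto|constructor].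
    + intros a Ha. apply in_map_iff in Ha as (x & <- & _). simpl. intros [H|[]]; discriminate.
  - intros a Ha. apply in_map_iff in Ha as (x & <- & _). rewrite in_app_iff, in_map_iff. simpl.
    intros [(y & H & _)|[H|[]]]; discriminate.
Qed.

Lemma in_alphabet_Burger k i : In (Burger i) (alphabet k) -> (i < k)%nat.
Proof.
  unfold alphabet. rewrite !in_app_iff, !in_map_iff.
  intros [(x & H1 & H2)|[(x & H1 & H2)|[H|[]]]]; try discriminate.
  inversion H1; subst. apply in_seq in H2; lia.
Qed.

Lemma in_alphabet_Order k i : In (Order i) (alphabet k) -> (i < k)%nat.
Proof.
  unfold alphabet. rewrite !in_app_iff, !in_map_iff.
  intros [(x & H1 & H2)|[(x & H1 & H2)|[H|[]]]]; try discriminate.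
  inversion H1; subst. apply in_seq in H2; lia.
Qed.

Lemma law_nonneg k p c : (1 <= k)%nat -> 0 <= p <= 1 -> 0 <= law k p c.
Proof.
  intros Hk Hp. assert (0 < INR k) by (apply lt_0_INR; lia).
  destruct c; simpl; try (destruct (Nat.ltb n k)); try lra.
  - apply Rlt_le, Rinv_0_lt_compat; lra.
  - unfold Rdiv. apply Rmult_le_pos; [lra|]. apply Rlt_le, Rinv_0_lt_compat; lra.
Qed.

Lemma law_sum k p : (1 <= k)%nat -> lsum (law k p) (alphabet k) = 1.
Proof.
  intros Hk. rewrite lsum_alphabet. assert (0 < INR k) by (apply lt_0_INR; lia).
  rewrite (lsum_ext_in _ (fun _ => / (2 * INR k))).
  2:{ intros x Hx. apply in_seq in Hx. simpl. destruct (Nat.ltb_spec x k); [auto|lia]. }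
  rewrite (lsum_ext_in (fun i => law k p (Order i)) (fun _ => (1 - p) / (2 * INR k))).
  2:{ intros x Hx. apply in_seq in Hx. simpl. destruct (Nat.ltb_spec x k); [auto|lia]. }
  rewrite !lsum_const_seq. simpl. field. lra.
Qed.

Fixpoint expect (k : nat) (p : R) (n : nat) (f : list theta -> R) : R :=
  match n with
  | O => f []
  | S n' => lsum (fun c => law k p c * expect k p n' (fun w => f (c :: w))) (alphabet k)
  end.

Lemma expect_ext k p n f g :
  (forall w, length w = n -> over_alphabet k w -> f w = g w) -> expect k p n f = expect k p n g.
Proof.
  revert f g; induction n; intros f g H; simpl.
  - apply H; [auto|constructor].
  - apply lsum_ext_in. intros c Hc. f_equal. apply IHn. intros w Hl Hv. apply H; simpl; auto.
    constructor; auto.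
Qed.

Lemma expect_le k p n f g : (1 <= k)%nat -> 0 <= p <= 1 ->
  (forall w, length w = n -> over_alphabet k w -> f w <= g w) -> expect k p n f <= expect k p n g.
Proof.
  intros Hk Hp. revert f g; induction n; intros f g H; simpl.
  - apply H; [auto|constructor].
  - apply lsum_le_in. intros c Hc. apply Rmult_le_compat_l; [apply law_nonneg; auto|].
    apply IHn. intros w Hl Hv. apply H; simpl; auto. constructor; auto.
Qed.

Lemma expect_plus k p n f g : expect k p n (fun w => f w + g w) = expect k p n f + expect k p n g.
Proof.
  revert f g; induction n; intros f g; simpl; auto.
  rewrite <- lsum_plus. apply lsum_ext_in. intros c _. rewrite IHn. lra.
Qed.

Lemma expect_scal k p n a f : expect k p n (fun w => a * f w) = a * expect k p n f.
Proof.
  revert f; induction n; intros f; simpl; auto.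
  rewrite <- lsum_scal. apply lsum_ext_in. intros c _. rewrite IHn. lra.
Qed.

Lemma expect_const k p n a : (1 <= k)%nat -> expect k p n (fun _ => a) = a.
Proof.
  intros Hk. induction n; simpl; auto.
  rewrite (lsum_ext_in _ (fun c => a * law k p c)) by (intros; rewrite IHn; lra).
  rewrite lsum_scal, law_sum; auto; lra.
Qed.

Lemma expect_app k p n m h :
  expect k p (n + m) h = expect k p n (fun u => expect k p m (fun v => h (u ++ v))).
Proof.
  revert h; induction n; intros h; simpl; auto.
  apply lsum_ext_in. intros c _. rewrite IHn. reflexivity.
Qed.

Lemma expect_prod k p n m f g : (1 <= k)%nat ->
  expect k p (n + m) (fun w => f (firstn n w) * g (skipn n w)) = expect k p n f * expect k p m g.
Proof.
  intros Hk. rewrite expect_app. rewrite (expect_ext _ _ _ _ (fun u => expect k p m g * f u)).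
  { rewrite expect_scal. lra. }
  intros u Hu _. rewrite (expect_ext _ _ _ _ (fun v => f u * g v)). { rewrite expect_scal. lra. }
  intros v _ _. rewrite firstn_app, skipn_app, Hu, Nat.sub_diag, firstn_O, skipn_O, app_nil_r.
  rewrite <- Hu, firstn_all, skipn_all. auto.
Qed.

Lemma expect_firstn k p n m f : (1 <= k)%nat ->
  expect k p (n + m) (fun w => f (firstn n w)) = expect k p n f.
Proof.
  intros Hk. rewrite <- (Rmult_1_r (expect k p n f)), <- (expect_const k p m 1 Hk), <- expect_prod
    by auto.
  apply expect_ext. intros. lra.
Qed.

Lemma expect_skipn k p n m f : (1 <= k)%nat ->
  expect k p (n + m) (fun w => f (skipn n w)) = expect k p m f.
Proof.
  intros Hk. rewrite <- (Rmult_1_l (expect k p m f)), <- (expect_const k p n 1 Hk), <- expect_prod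
    by auto.
  apply expect_ext. intros. lra.
Qed.

Lemma expect_cons k p n (a : theta -> R) f : (1 <= k)%nat ->
  expect k p (S n) (fun w => a (hd Flex w) + f (tl w))
  = lsum (fun c => law k p c * a c) (alphabet k) + expect k p n f.
Proof.
  intros Hk. simpl.
  rewrite (lsum_ext_in _ (fun c => law k p c * a c + expect k p n f * law k p c)).
  - rewrite lsum_plus, lsum_scal, law_sum; auto. lra.
  - intros c _. rewrite expect_plus, expect_const; auto. lra.
Qed.

Section TypeStack.
Local Open Scope nat_scope.

(* The stack algorithm of [Defs] with positions forgotten: a stack is the list of
   types of the unconsumed burgers, most recent first.  This is all the counting
   argument needs, and it is invariant under relabelling the types. *)
Fixpoint remove_type (i : nat) (l : list nat) : option (list nat) :=
  match l with
  | [] => None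
  | t :: l' => if Nat.eqb t i then Some l'
               else match remove_type i l' with Some l'' => Some (t :: l'') | None => None end
  end.

Definition consume_type (c : theta) (l : list nat) : option (list nat) :=
  match c with
  | Burger _ => None
  | Order i => remove_type i l
  | Flex => match l with [] => None | _ :: l' => Some l' end
  end.

Definition type_step (l : list nat) (c : theta) : list nat :=
  match c with
  | Burger i => i :: l
  | _ => match consume_type c l with Some l' => l' | None => l end
  end.

Definition type_run (w : list theta) (l : list nat) : list nat := fold_left type_step w l.

Definition count_type (j : nat) (l : list nat) : nat := length (filter (Nat.eqb j) l).

Lemma type_run_cons c w T : type_run (c :: w) T = type_run w (type_step T c).
Proof. reflexivity. Qed.

Lemma count_type_app j l1 l2 : count_type j (l1 ++ l2) = count_type j l1 + count_type j l2.
Proof. unfold count_type. rewrite filter_app. apply length_app. Qed.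

Lemma count_type_cons j t l :
  count_type j (t :: l) = (if Nat.eqb j t then 1 else 0) + count_type j l.
Proof. unfold count_type. simpl. destruct (Nat.eqb j t); reflexivity. Qed.

Lemma count_type_le j l : count_type j l <= length l.
Proof. apply filter_length_le. Qed.

Lemma remove_type_decomp i l l' :
  remove_type i l = Some l' -> exists A B, l = A ++ i :: B /\ l' = A ++ B.
Proof.
  revert l'; induction l as [|t l IH]; intros l' H; simpl in H; [discriminate|].
  destruct (Nat.eqb_spec t i) as [->|].
  - inversion H; subst. exists [], l'. auto.
  - destruct (remove_type i l) eqn:E; [|discriminate]. inversion H; subst.
    destruct (IH _ eq_refl) as (A & B & -> & ->). exists (t :: A), B. auto.
Qed.

Lemma remove_type_none i l : remove_type i l = None -> count_type i l = 0.
Proof.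
  induction l as [|t l IH]; simpl; auto. rewrite count_type_cons.
  destruct (Nat.eqb_spec t i); [discriminate|].
  destruct (remove_type i l); [discriminate|]. intros _.
  destruct (Nat.eqb_spec i t); [congruence|]. auto.
Qed.

Lemma consume_type_decomp c l l' :
  consume_type c l = Some l' -> exists A t B, l = A ++ t :: B /\ l' = A ++ B.
Proof.
  destruct c; simpl; intros H; [discriminate| |].
  - destruct (remove_type_decomp _ _ _ H) as (A & B & HA & HB). eauto.
  - destruct l as [|t l]; [discriminate|]. inversion H; subst. exists [], t, l'. auto.
Qed.

Lemma consume_type_length c l l' : consume_type c l = Some l' -> length l = S (length l').
Proof.
  intros H. destruct (consume_type_decomp _ _ _ H) as (A & t & B & -> & ->).
  rewrite !length_app. simpl. lia.
Qed.

Lemma consume_type_count c l l' j : consume_type c l = Some l' ->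
  count_type j l' <= count_type j l <= S (count_type j l').
Proof.
  intros H. destruct (consume_type_decomp _ _ _ H) as (A & t & B & -> & ->).
  rewrite !count_type_app, count_type_cons. destruct (Nat.eqb j t); lia.
Qed.

Lemma consume_type_incl c l l' : consume_type c l = Some l' -> incl l' l.
Proof.
  intros H. destruct (consume_type_decomp _ _ _ H) as (A & t & B & -> & ->).
  intros x. rewrite !in_app_iff. simpl. tauto.
Qed.

Lemma remove_type_count i l l' : remove_type i l = Some l' -> count_type i l = S (count_type i l').
Proof.
  intros H. destruct (remove_type_decomp _ _ _ H) as (A & B & -> & ->).
  rewrite !count_type_app, count_type_cons, Nat.eqb_refl. lia.
Qed.

Lemma type_step_length T c : length (type_step T c) <= S (length T).
Proof.
  unfold type_step. destruct c; [simpl; lia| |];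
    destruct (consume_type _ T) eqn:E; try lia; apply consume_type_length in E; lia.
Qed.

Lemma remove_type_app i T B : remove_type i (T ++ B) =
  match remove_type i T with
  | Some T' => Some (T' ++ B)
  | None => match remove_type i B with Some B' => Some (T ++ B') | None => None end
  end.
Proof.
  induction T as [|t T IH]; simpl.
  - destruct (remove_type i B); auto.
  - destruct (Nat.eqb t i); auto. rewrite IH.
    destruct (remove_type i T); auto. destruct (remove_type i B); auto.
Qed.

Lemma consume_type_app c T B : consume_type c (T ++ B) =
  match consume_type c T with
  | Some T' => Some (T' ++ B)
  | None => match consume_type c B with Some B' => Some (T ++ B') | None => None end
  end.
Proof.
  destruct c; simpl; auto.
  - apply remove_type_app.
  - destruct T; simpl; auto. destruct B; auto.
Qed.

(* Reading a word on a stack [T ++ B], the top part [T] evolves as if [B] were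
   absent; [bottom_step]/[bottom_run] track what is left of [B]. *)
Definition bottom_step (T B : list nat) (c : theta) : list nat :=
  match c with
  | Burger _ => B
  | _ => match consume_type c T with
         | Some _ => B
         | None => match consume_type c B with Some B' => B' | None => B end
         end
  end.

Fixpoint bottom_run (w : list theta) (T B : list nat) : list nat :=
  match w with
  | [] => B
  | c :: w' => bottom_run w' (type_step T c) (bottom_step T B c)
  end.

Lemma type_step_app T B c : type_step (T ++ B) c = type_step T c ++ bottom_step T B c.
Proof.
  unfold type_step, bottom_step. destruct c; auto; rewrite consume_type_app;
    destruct (consume_type _ T); auto; destruct (consume_type _ B); auto.
Qed.

Lemma type_run_app_stack w T B : type_run w (T ++ B) = type_run w T ++ bottom_run w T B.
Proof.
  revert T B; induction w as [|c w IH]; intros T B; [reflexivity|].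
  rewrite !type_run_cons, type_step_app. apply IH.
Qed.

Lemma bottom_step_length T B c :
  length (bottom_step T B c) <= length B <= S (length (bottom_step T B c)).
Proof.
  unfold bottom_step. destruct c; try lia; destruct (consume_type _ T); try lia;
    destruct (consume_type _ B) eqn:E; try lia; apply consume_type_length in E; lia.
Qed.

Lemma bottom_step_count j T B c :
  count_type j B <= count_type j (bottom_step T B c) + (length B - length (bottom_step T B c)).
Proof.
  unfold bottom_step. destruct c; try lia; destruct (consume_type _ T); try lia;
    destruct (consume_type _ B) eqn:E; try lia;
    pose proof (consume_type_length _ _ _ E); pose proof (consume_type_count _ _ _ j E); lia.
Qed.

Lemma bottom_run_length w T B : length (bottom_run w T B) <= length B.
Proof.
  revert T B; induction w as [|c w IH]; intros T B; simpl; auto.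
  pose proof (bottom_step_length T B c). specialize (IH (type_step T c) (bottom_step T B c)). lia.
Qed.

Fixpoint count_if (P : list nat -> theta -> bool) (w : list theta) (T : list nat) : nat :=
  match w with
  | [] => 0
  | c :: w' => (if P T c then 1 else 0) + count_if P w' (type_step T c)
  end.

Definition flex_fails (T : list nat) (c : theta) : bool :=
  match c, T with Flex, [] => true | _, _ => false end.

Definition order_of_type_fails (j : nat) (T : list nat) (c : theta) : bool :=
  match c with
  | Order i => Nat.eqb i j && match remove_type i T with None => true | _ => false end
  | _ => false
  end.

Definition order_fails (T : list nat) (c : theta) : bool :=
  match c with
  | Burger _ => false
  | _ => match consume_type c T with None => true | _ => false end
  end.

(* Each flexible order that fails on the top part eats one burger of the bottom part. *)
Lemma bottom_run_flex_cancel w T B :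
  length (bottom_run w T B) + Nat.min (length B) (count_if flex_fails w T) <= length B.
Proof.
  revert T B; induction w as [|c w IH]; intros T B; simpl; [lia|].
  destruct (flex_fails T c) eqn:EP.
  - destruct c, T; try discriminate. simpl. destruct B as [|b B].
    + simpl. pose proof (bottom_run_length w [] []). simpl in *. lia.
    + simpl. specialize (IH [] B). simpl in IH. lia.
  - pose proof (bottom_step_length T B c). specialize (IH (type_step T c) (bottom_step T B c)).
    lia.
Qed.

Lemma bottom_run_order_cancel j w T B :
  length (bottom_run w T B) + Nat.min (count_type j B) (count_if (order_of_type_fails j) w T)
  <= length B.
Proof.
  revert T B; induction w as [|c w IH]; intros T B; simpl.
  - pose proof (count_type_le j B). lia.
  - destruct (order_of_type_fails j T c) eqn:EP.
    + destruct c; simpl in EP; try discriminate.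
      destruct (Nat.eqb_spec n j); simpl in EP; try discriminate. subst n.
      destruct (remove_type j T) eqn:ET; try discriminate.
      unfold bottom_step. simpl. rewrite ET.
      destruct (remove_type j B) eqn:EB.
      * pose proof (remove_type_count _ _ _ EB).
        pose proof (consume_type_length (Order j) _ _ EB). specialize (IH T l). lia.
      * rewrite (remove_type_none _ _ EB). pose proof (bottom_run_length w T B). lia.
    + pose proof (bottom_step_length T B c). pose proof (bottom_step_count j T B c).
      specialize (IH (type_step T c) (bottom_step T B c)). lia.
Qed.

End TypeStack.

Section WordStatistics.
Local Open Scope nat_scope.

Definition burgers_left w := length (type_run w []).
Definition flex_left w := count_if flex_fails w [].
Definition orders_left_of j w := count_if (order_of_type_fails j) w [].
Definition orders_left w := count_if order_fails w [].
Definition burgers_left_of j w := count_type j (type_run w []).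
(* 1 iff the first letter of w is a burger not consumed within w *)
Definition first_burger_left w := burgers_left w - burgers_left (tl w).
Definition last_order_left w :=
  if order_fails (type_run (removelast w) []) (last w Flex) then 1 else 0.

Fixpoint sum_upto (k : nat) (f : nat -> nat) : nat :=
  match k with 0 => 0 | S k' => sum_upto k' f + f k' end.

Lemma sum_upto_plus k f g : sum_upto k (fun j => f j + g j) = sum_upto k f + sum_upto k g.
Proof. induction k; simpl; lia. Qed.

Lemma sum_upto_ext k f g : (forall j, f j = g j) -> sum_upto k f = sum_upto k g.
Proof. intros H. induction k as [|k IH]; [reflexivity|]. simpl. rewrite IH, H. reflexivity. Qed.

Lemma sum_upto_ge k f i : i < k -> f i <= sum_upto k f.
Proof.
  induction k; simpl; intros H; [lia|].
  destruct (Nat.eq_dec i k); [subst; lia|]. specialize (IHk ltac:(lia)). lia.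
Qed.

Lemma sum_upto_indicator k x : x < k -> sum_upto k (fun j => if Nat.eqb j x then 1 else 0) = 1.
Proof.
  assert (Hzero : forall m, m <= x -> sum_upto m (fun j => if Nat.eqb j x then 1 else 0) = 0).
  { induction m; simpl; intros; auto. destruct (Nat.eqb_spec m x); [lia|]. rewrite IHm; lia. }
  induction k; simpl; intros H; [lia|]. destruct (Nat.eqb_spec k x) as [->|].
  - rewrite Hzero; lia.
  - rewrite IHk; lia.
Qed.

Lemma burgers_left_cons c w : burgers_left (c :: w) = burgers_left w + first_burger_left (c :: w).
Proof.
  unfold first_burger_left, burgers_left. simpl tl. rewrite type_run_cons.
  destruct c; simpl; [|lia|lia].
  change [n] with ([] ++ [n]). rewrite type_run_app_stack, length_app.
  pose proof (bottom_run_length w [] [n]). simpl in *. lia.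
Qed.

Lemma type_run_app u v :
  type_run (u ++ v) [] = type_run v [] ++ bottom_run v [] (type_run u []).
Proof.
  unfold type_run at 1. rewrite fold_left_app.
  change (fold_left type_step v (fold_left type_step u [])) with (type_run v ([] ++ type_run u [])).
  apply type_run_app_stack.
Qed.

Lemma burgers_left_app_le u v : burgers_left (u ++ v) <= burgers_left u + burgers_left v.
Proof.
  unfold burgers_left. rewrite type_run_app, length_app.
  pose proof (bottom_run_length v [] (type_run u [])). lia.
Qed.

Lemma burgers_left_app_flex u v :
  burgers_left (u ++ v) + Nat.min (burgers_left u) (flex_left v) <= burgers_left u + burgers_left v.
Proof.
  unfold burgers_left, flex_left. rewrite type_run_app, length_app.
  pose proof (bottom_run_flex_cancel v [] (type_run u [])). lia.
Qed.

Lemma burgers_left_app_order j u v :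
  burgers_left (u ++ v) + Nat.min (burgers_left_of j u) (orders_left_of j v)
  <= burgers_left u + burgers_left v.
Proof.
  unfold burgers_left, burgers_left_of, orders_left_of. rewrite type_run_app, length_app.
  pose proof (bottom_run_order_cancel j v [] (type_run u [])). lia.
Qed.

Lemma count_if_snoc P w c T :
  count_if P (w ++ [c]) T = count_if P w T + (if P (type_run w T) c then 1 else 0).
Proof. revert T; induction w as [|d w IH]; intros T; simpl; [lia|]. rewrite IH. simpl. lia. Qed.

Lemma orders_left_snoc w c : orders_left (w ++ [c]) = orders_left w + last_order_left (w ++ [c]).
Proof.
  unfold orders_left, last_order_left. rewrite count_if_snoc, removelast_last, last_last. auto.
Qed.

Lemma count_if_le P w T : count_if P w T <= length w.
Proof.
  revert T; induction w as [|c w IH]; intros T; simpl; [lia|].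
  specialize (IH (type_step T c)). destruct (P T c); lia.
Qed.

Definition is_burger (c : theta) : nat := match c with Burger _ => 1 | _ => 0 end.
Definition n_burgers (w : list theta) : nat := fold_right (fun c a => is_burger c + a) 0 w.
Definition n_orders (w : list theta) : nat := fold_right (fun c a => (1 - is_burger c) + a) 0 w.

Lemma type_run_length_balance w T :
  length (type_run w T) + n_orders w = length T + n_burgers w + count_if order_fails w T.
Proof.
  revert T; induction w as [|c w IH]; intros T; [simpl; lia|].
  rewrite type_run_cons. simpl count_if. simpl n_orders. simpl n_burgers.
  specialize (IH (type_step T c)).
  destruct c; [simpl in *; lia| |]; simpl order_fails; simpl is_burger; unfold type_step in *;
    destruct (consume_type _ T) eqn:E; try pose proof (consume_type_length _ _ _ E);
    simpl in *; try rewrite E; lia.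
Qed.

Lemma burgers_left_balance w : burgers_left w + n_orders w = n_burgers w + orders_left w.
Proof.
  pose proof (type_run_length_balance w []). unfold burgers_left, orders_left. simpl in *. lia.
Qed.

Lemma count_order_fails_le k w T : over_alphabet k w ->
  count_if order_fails w T
  <= count_if flex_fails w T + sum_upto k (fun j => count_if (order_of_type_fails j) w T).
Proof.
  revert T; induction w as [|c w IH]; intros T Hv; simpl; [lia|].
  inversion Hv as [|? ? Hc Hw]; subst. specialize (IH (type_step T c) Hw).
  rewrite sum_upto_plus.
  assert ((if order_fails T c then 1 else 0)
          <= (if flex_fails T c then 1 else 0)
             + sum_upto k (fun j => if order_of_type_fails j T c then 1 else 0)); [|lia].
  destruct c; simpl; try lia.
  - apply in_alphabet_Order in Hc.
    pose proof (sum_upto_ge k (fun j => if order_of_type_fails j T (Order n) then 1 else 0) n Hc)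
      as H.
    simpl in H. rewrite Nat.eqb_refl in H. simpl in H. destruct (remove_type n T); lia.
  - destruct T; lia.
Qed.

Lemma burgers_left_le w : burgers_left w <= length w.
Proof.
  assert (H : forall T, length (type_run w T) <= length T + length w).
  { induction w as [|c w IH]; intros T; [simpl; lia|]. rewrite type_run_cons.
    specialize (IH (type_step T c)). pose proof (type_step_length T c). simpl. lia. }
  apply H.
Qed.

Lemma burgers_left_of_le j w : burgers_left_of j w <= burgers_left w.
Proof. apply count_type_le. Qed.

Lemma type_run_types_lt k w T : over_alphabet k w -> (forall x, In x T -> x < k) ->
  forall x, In x (type_run w T) -> x < k.
Proof.
  revert T; induction w as [|c w IH]; intros T Hv HT; [simpl; auto|].
  inversion Hv; subst. rewrite type_run_cons. apply IH; auto.
  intros x Hx. unfold type_step in Hx. destruct c.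
  - destruct Hx; [subst; apply in_alphabet_Burger; auto|auto].
  - destruct (consume_type _ T) eqn:E; auto. apply (consume_type_incl _ _ _ E) in Hx. auto.
  - destruct (consume_type _ T) eqn:E; auto. apply (consume_type_incl _ _ _ E) in Hx. auto.
Qed.

Lemma length_eq_sum_count_type k l :
  (forall x, In x l -> x < k) -> length l = sum_upto k (fun j => count_type j l).
Proof.
  induction l as [|x l IH]; intros H.
  - clear H. induction k as [|k IHk]; [reflexivity|]. simpl. rewrite <- IHk. reflexivity.
  - rewrite (sum_upto_ext k _ (fun j => (if Nat.eqb j x then 1 else 0) + count_type j l))
      by (intros; apply count_type_cons).
    rewrite sum_upto_plus, sum_upto_indicator, <- IH by (simpl in H; auto). reflexivity.
Qed.

Lemma burgers_left_sum k w :
  over_alphabet k w -> burgers_left w = sum_upto k (fun j => burgers_left_of j w).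
Proof.
  intros Hv. apply length_eq_sum_count_type. apply type_run_types_lt; auto. intros _ [].
Qed.

End WordStatistics.

Definition burgers_leftR (w : list theta) : R := INR (burgers_left w).
Definition orders_leftR (w : list theta) : R := INR (orders_left w).

Lemma burger_mass_eq_order_mass k p : (1 <= k)%nat ->
  lsum (fun c => law k p c * INR (is_burger c)) (alphabet k)
  = lsum (fun c => law k p c * INR (1 - is_burger c)) (alphabet k).
Proof.
  intros Hk. assert (0 < INR k) by (apply lt_0_INR; lia).
  rewrite !lsum_alphabet. simpl.
  rewrite (lsum_ext_in (fun i => law k p (Burger i) * 1) (fun _ => / (2 * INR k))).
  2:{ intros x Hx. apply in_seq in Hx. simpl. destruct (Nat.ltb_spec x k); [lra|lia]. }
  rewrite (lsum_ext_in (fun i => law k p (Order i) * 0) (fun _ => 0)) by (intros; lra).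
  rewrite (lsum_ext_in (fun i => law k p (Burger i) * 0) (fun _ => 0)) by (intros; lra).
  rewrite (lsum_ext_in (fun i => law k p (Order i) * 1) (fun _ => (1 - p) / (2 * INR k))).
  2:{ intros x Hx. apply in_seq in Hx. simpl. destruct (Nat.ltb_spec x k); [lra|lia]. }
  rewrite !lsum_const_seq. field. lra.
Qed.

Lemma expect_n_burgers_n_orders k p n : (1 <= k)%nat ->
  expect k p n (fun w => INR (n_burgers w)) = expect k p n (fun w => INR (n_orders w)).
Proof.
  intros Hk. induction n; [reflexivity|].
  rewrite (expect_ext _ _ _ _ (fun w => INR (is_burger (hd Flex w)) + INR (n_burgers (tl w)))).
  2:{ intros [|c w] Hl _; [discriminate|]. simpl. apply plus_INR. }
  rewrite (expect_ext _ _ _ (fun w => INR (n_orders w))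
             (fun w => INR (1 - is_burger (hd Flex w)) + INR (n_orders (tl w)))).
  2:{ intros [|c w] Hl _; [discriminate|]. simpl. apply plus_INR. }
  rewrite (expect_cons k p n (fun c => INR (is_burger c)) (fun w => INR (n_burgers w))),
    (expect_cons k p n (fun c => INR (1 - is_burger c)) (fun w => INR (n_orders w))), IHn,
    burger_mass_eq_order_mass by auto.
  reflexivity.
Qed.

Lemma expect_burgers_left_orders_left k p n : (1 <= k)%nat ->
  expect k p n burgers_leftR = expect k p n orders_leftR.
Proof.
  intros Hk.
  assert (H : expect k p n (fun w => burgers_leftR w + INR (n_orders w))
              = expect k p n (fun w => orders_leftR w + INR (n_burgers w))).
  { apply expect_ext. intros w _ _. unfold burgers_leftR, orders_leftR. rewrite <- !plus_INR.
    f_equal. pose proof (burgers_left_balance w). lia. }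
  rewrite !expect_plus, expect_n_burgers_n_orders in H; auto. lra.
Qed.

Lemma expect_burgers_left_S k p n : (1 <= k)%nat ->
  expect k p (S n) burgers_leftR
  = expect k p n burgers_leftR + expect k p (S n) (fun w => INR (first_burger_left w)).
Proof.
  intros Hk. rewrite <- (expect_skipn k p 1 n burgers_leftR Hk). simpl plus. rewrite <- expect_plus.
  apply expect_ext. intros [|c w] Hl _; [discriminate|]. unfold burgers_leftR.
  rewrite <- plus_INR. f_equal. apply burgers_left_cons.
Qed.

Lemma expect_orders_left_S k p n : (1 <= k)%nat ->
  expect k p (S n) orders_leftR
  = expect k p n orders_leftR + expect k p (S n) (fun w => INR (last_order_left w)).
Proof.
  intros Hk. rewrite <- (expect_firstn k p n 1 orders_leftR Hk), Nat.add_1_r, <- expect_plus.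
  apply expect_ext. intros w Hl _. unfold orders_leftR. rewrite <- plus_INR. f_equal.
  assert (Hw : w <> []) by (intros ->; discriminate).
  rewrite (app_removelast_last Flex Hw) at 1 3. rewrite orders_left_snoc.
  rewrite removelast_firstn_len, Hl. reflexivity.
Qed.

Definition relabel (f : nat -> nat) (c : theta) : theta :=
  match c with Burger i => Burger (f i) | Order i => Order (f i) | Flex => Flex end.

Section Relabel.
Variable f : nat -> nat.
Hypothesis f_inj : Injective f.

Lemma eqb_inj x y : Nat.eqb (f x) (f y) = Nat.eqb x y.
Proof.
  destruct (Nat.eqb_spec x y) as [->|Hxy]; [apply Nat.eqb_refl|].
  apply Nat.eqb_neq. intros H. apply Hxy, f_inj, H.
Qed.

Lemma remove_type_relabel i T :
  remove_type (f i) (map f T) = option_map (map f) (remove_type i T).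
Proof.
  induction T as [|t T IH]; simpl; auto. rewrite eqb_inj. destruct (Nat.eqb t i); auto.
  rewrite IH. destruct (remove_type i T); auto.
Qed.

Lemma type_step_relabel c T : type_step (map f T) (relabel f c) = map f (type_step T c).
Proof.
  destruct c; simpl; auto.
  - rewrite remove_type_relabel. destruct (remove_type n T); simpl; auto.
  - destruct T; simpl; auto.
Qed.

Lemma type_run_relabel w T : type_run (map (relabel f) w) (map f T) = map f (type_run w T).
Proof.
  revert T; induction w as [|c w IH]; intros T; [reflexivity|].
  change (map (relabel f) (c :: w)) with (relabel f c :: map (relabel f) w).
  rewrite !type_run_cons, type_step_relabel. apply IH.
Qed.

Lemma count_type_relabel j l : count_type (f j) (map f l) = count_type j l.
Proof.
  unfold count_type. induction l as [|x l IH]; simpl; auto. rewrite eqb_inj.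
  destruct (Nat.eqb j x); simpl; auto.
Qed.

End Relabel.

Definition swap_nat (a b i : nat) : nat :=
  if Nat.eqb i a then b else if Nat.eqb i b then a else i.

Lemma swap_nat_involutive a b i : swap_nat a b (swap_nat a b i) = i.
Proof.
  unfold swap_nat. destruct (Nat.eqb_spec i a); subst.
  - destruct (Nat.eqb_spec b a); subst; [auto|]. rewrite Nat.eqb_refl. auto.
  - destruct (Nat.eqb_spec i b); subst.
    + rewrite Nat.eqb_refl. auto.
    + destruct (Nat.eqb_spec i a); [congruence|]. destruct (Nat.eqb_spec i b); [congruence|auto].
Qed.

Lemma swap_nat_inj a b : Injective (swap_nat a b).
Proof.
  intros x y H. rewrite <- (swap_nat_involutive a b x), <- (swap_nat_involutive a b y), H. auto.
Qed.

Lemma swap_nat_lt a b k i : (a < k)%nat -> (b < k)%nat -> Nat.ltb (swap_nat a b i) k = Nat.ltb i k.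
Proof.
  intros Ha Hb. unfold swap_nat. destruct (Nat.eqb_spec i a); subst.
  - destruct (Nat.ltb_spec b k), (Nat.ltb_spec a k); auto; lia.
  - destruct (Nat.eqb_spec i b); subst; auto.
    destruct (Nat.ltb_spec b k), (Nat.ltb_spec a k); auto; lia.
Qed.

Lemma law_swap k p a b c : (a < k)%nat -> (b < k)%nat ->
  law k p (relabel (swap_nat a b) c) = law k p c.
Proof. intros Ha Hb. destruct c; simpl; rewrite ?swap_nat_lt; auto. Qed.

Lemma lsum_alphabet_swap k a b (h : theta -> R) : (a < k)%nat -> (b < k)%nat ->
  lsum (fun c => h (relabel (swap_nat a b) c)) (alphabet k) = lsum h (alphabet k).
Proof.
  intros Ha Hb.
  assert (Hseq : forall g : nat -> R,
             lsum (fun i => g (swap_nat a b i)) (seq 0 k) = lsum g (seq 0 k)).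
  { intros g. rewrite <- (lsum_map g (swap_nat a b)). apply lsum_perm.
    apply Permutation_map_same_l.
    - apply Injective_map_NoDup; [apply swap_nat_inj|apply seq_NoDup].
    - intros x Hx. apply in_map_iff in Hx as (y & <- & Hy). apply in_seq in Hy. apply in_seq.
      unfold swap_nat. destruct (Nat.eqb_spec y a); [lia|]. destruct (Nat.eqb_spec y b); lia. }
  rewrite !lsum_alphabet. simpl.
  rewrite (Hseq (fun i => h (Burger i))), (Hseq (fun i => h (Order i))).
  reflexivity.
Qed.

Lemma expect_swap k p a b n g : (a < k)%nat -> (b < k)%nat ->
  expect k p n (fun w => g (map (relabel (swap_nat a b)) w)) = expect k p n g.
Proof.
  intros Ha Hb. revert g; induction n; intros g; simpl; auto.
  rewrite (lsum_ext_in _ (fun c => law k p (relabel (swap_nat a b) c)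
                                  * expect k p n (fun w => g (relabel (swap_nat a b) c :: w)))).
  - apply (lsum_alphabet_swap k a b (fun c => law k p c * expect k p n (fun w => g (c :: w))));
      auto.
  - intros c _. rewrite law_swap; auto. f_equal. apply (IHn (fun w => g (_ :: w))).
Qed.

Lemma expect_burgers_left_of_indep k p n j : (j < k)%nat ->
  expect k p n (fun w => INR (burgers_left_of j w))
  = expect k p n (fun w => INR (burgers_left_of 0 w)).
Proof.
  intros Hj. rewrite <- (expect_swap k p 0 j n (fun w => INR (burgers_left_of j w))); [|lia|auto].
  apply expect_ext. intros w _ _. unfold burgers_left_of. f_equal.
  change (@nil nat) with (map (swap_nat 0 j) []). rewrite type_run_relabel by apply swap_nat_inj.
  replace j with (swap_nat 0 j 0) at 1 by (unfold swap_nat; simpl; auto).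
  apply count_type_relabel, swap_nat_inj.
Qed.

Lemma lsum_lt_const {A} (f : A -> R) l c :
  l <> [] -> (forall x, In x l -> f x < c) -> lsum f l < INR (length l) * c.
Proof.
  induction l as [|a l IH]; intros Hne H; [congruence|].
  change (length (a :: l)) with (S (length l)). rewrite S_INR. simpl lsum.
  pose proof (H a (or_introl eq_refl)) as Ha.
  destruct l as [|b l]; [simpl; lra|].
  pose proof (IH ltac:(discriminate) (fun x Hx => H x (or_intror Hx))). lra.
Qed.

Lemma lsum_pigeonhole {A} (f : A -> R) l s :
  l <> [] -> s <= lsum f l -> exists x, In x l /\ s / INR (length l) <= f x.
Proof.
  intros Hne Hs. apply NNPP. intros Hn.
  assert (Hlt : forall x, In x l -> f x < s / INR (length l)).
  { intros x Hx. apply Rnot_le_lt. intros H. apply Hn. eauto. }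
  pose proof (lsum_lt_const f l _ Hne Hlt).
  assert (0 < INR (length l)) by (apply lt_0_INR; destruct l; [congruence|simpl; lia]).
  replace (INR (length l) * (s / INR (length l))) with s in H by (field; lra). lra.
Qed.

Lemma expect_sum_upto k p n K (g : nat -> list theta -> nat) : (1 <= k)%nat ->
  expect k p n (fun w => INR (sum_upto K (fun j => g j w)))
  = lsum (fun j => expect k p n (fun w => INR (g j w))) (seq 0 K).
Proof.
  intros Hk. induction K; simpl sum_upto.
  - apply (expect_const k p n 0 Hk).
  - rewrite seq_S, lsum_app, <- IHK. simpl. rewrite Rplus_0_r, <- expect_plus.
    apply expect_ext. intros. apply plus_INR.
Qed.

Definition indicator_ge (th : R) (f : list theta -> R) (w : list theta) : R :=
  if Rle_dec th (f w) then 1 else 0.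

Lemma expect_indicator_half_mean k p N f a : (1 <= k)%nat -> 0 <= p <= 1 -> (1 <= N)%nat ->
  0 <= a -> (forall w, length w = N -> over_alphabet k w -> 0 <= f w <= INR N) ->
  a <= expect k p N f -> a / (2 * INR N) <= expect k p N (indicator_ge (a / 2) f).
Proof.
  intros Hk Hp HN Ha Hf HE.
  assert (HNp : 0 < INR N) by (apply lt_0_INR; lia).
  assert (H : expect k p N f
              <= expect k p N (fun w => a / 2 + INR N * indicator_ge (a / 2) f w)).
  { apply expect_le; auto. intros w Hl Hv. specialize (Hf w Hl Hv). unfold indicator_ge.
    destruct (Rle_dec (a / 2) (f w)); lra. }
  rewrite expect_plus, expect_const, expect_scal in H; auto.
  set (E := expect k p N (indicator_ge (a / 2) f)) in *.
  apply (Rmult_le_reg_l (2 * INR N)); [lra|]. field_simplify; [|lra]. lra.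
Qed.

Definition merge_gain (N : nat) (w : list theta) : R :=
  burgers_leftR (firstn N w) + burgers_leftR (skipn N w) - burgers_leftR w.

Lemma expect_merge_gain k p N : (1 <= k)%nat ->
  expect k p (N + N) (merge_gain N)
  = 2 * expect k p N burgers_leftR - expect k p (N + N) burgers_leftR.
Proof.
  intros Hk. unfold merge_gain.
  rewrite (expect_ext _ _ _ _ (fun w => (burgers_leftR (firstn N w) + burgers_leftR (skipn N w))
                                       + (-1) * burgers_leftR w)) by (intros; lra).
  rewrite !expect_plus, expect_scal, expect_firstn, expect_skipn by auto. lra.
Qed.

Lemma merge_gain_nonneg N w : 0 <= merge_gain N w.
Proof.
  unfold merge_gain, burgers_leftR. rewrite <- (firstn_skipn N w) at 3.
  pose proof (le_INR _ _ (burgers_left_app_le (firstn N w) (skipn N w))) as H.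
  rewrite plus_INR in H. lra.
Qed.

(* If some statistic [g1] of the first half is large and some statistic [g2] of
   the second half cancels against it, both with probability bounded below,
   then by independence of the halves the merge gain is large on average. *)
Lemma expect_merge_gain_lower k p N (g1 g2 : list theta -> nat) a1 a2 th :
  (1 <= k)%nat -> 0 <= p <= 1 -> (1 <= N)%nat ->
  0 <= a1 -> 0 <= a2 -> 0 <= th -> th <= a1 / 2 -> th <= a2 / 2 ->
  (forall w, (g1 w <= length w)%nat) -> (forall w, (g2 w <= length w)%nat) ->
  (forall u v,
     (burgers_left (u ++ v) + Nat.min (g1 u) (g2 v) <= burgers_left u + burgers_left v)%nat) ->
  a1 <= expect k p N (fun w => INR (g1 w)) -> a2 <= expect k p N (fun w => INR (g2 w)) ->
  th * (a1 / (2 * INR N)) * (a2 / (2 * INR N)) <= expect k p (N + N) (merge_gain N).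
Proof.
  intros Hk Hp HN Ha1 Ha2 Hth Hth1 Hth2 Hg1 Hg2 Hcancel HE1 HE2.
  assert (HNp : 0 < INR N) by (apply lt_0_INR; lia).
  assert (Hrange : forall g : list theta -> nat, (forall w, (g w <= length w)%nat) ->
            forall w, length w = N -> over_alphabet k w -> 0 <= INR (g w) <= INR N).
  { intros g Hg w Hl _. split; [apply pos_INR|]. apply le_INR. rewrite <- Hl. auto. }
  pose proof (expect_indicator_half_mean k p N _ a1 Hk Hp HN Ha1 (Hrange g1 Hg1) HE1) as P1.
  pose proof (expect_indicator_half_mean k p N _ a2 Hk Hp HN Ha2 (Hrange g2 Hg2) HE2) as P2.
  apply Rle_trans with
    (th * expect k p N (indicator_ge (a1 / 2) (fun w => INR (g1 w)))
        * expect k p N (indicator_ge (a2 / 2) (fun w => INR (g2 w)))).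
  { rewrite !Rmult_assoc. apply Rmult_le_compat_l; [lra|].
    apply Rmult_le_compat; try lra; apply Rle_mult_inv_pos; lra. }
  rewrite Rmult_assoc, <- expect_prod, <- expect_scal by auto.
  apply expect_le; auto. intros w _ _.
  pose proof (merge_gain_nonneg N w) as Hgain.
  unfold indicator_ge, merge_gain in *.
  destruct (Rle_dec (a1 / 2) (INR (g1 (firstn N w)))) as [H1|H1];
    destruct (Rle_dec (a2 / 2) (INR (g2 (skipn N w)))) as [H2|H2]; try lra.
  rewrite <- (firstn_skipn N w) at 3. unfold burgers_leftR.
  pose proof (le_INR _ _ (Hcancel (firstn N w) (skipn N w))) as H. rewrite !plus_INR in H.
  assert (th <= INR (Nat.min (g1 (firstn N w)) (g2 (skipn N w)))).
  { destruct (Nat.min_spec (g1 (firstn N w)) (g2 (skipn N w))) as [[_ ->]|[_ ->]]; lra. }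
  lra.
Qed.

Lemma expect_burgers_left_le_fails k p N : (1 <= k)%nat -> 0 <= p <= 1 ->
  expect k p N burgers_leftR
  <= expect k p N (fun w => INR (flex_left w))
     + lsum (fun j => expect k p N (fun w => INR (orders_left_of j w))) (seq 0 k).
Proof.
  intros Hk Hp. rewrite expect_burgers_left_orders_left by auto.
  unfold orders_left_of. rewrite <- expect_sum_upto, <- expect_plus by auto.
  apply expect_le; auto. intros w _ Hv. unfold orders_leftR. rewrite <- plus_INR.
  apply le_INR, count_order_fails_le; auto.
Qed.

Lemma expect_burgers_left_eq k p N : (1 <= k)%nat ->
  expect k p N burgers_leftR = INR k * expect k p N (fun w => INR (burgers_left_of 0 w)).
Proof.
  intros Hk.
  rewrite (expect_ext _ _ _ burgers_leftR
             (fun w => INR (sum_upto k (fun j => burgers_left_of j w)))).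
  2:{ intros w _ Hv. unfold burgers_leftR. f_equal. apply burgers_left_sum; auto. }
  rewrite expect_sum_upto by auto.
  rewrite (lsum_ext_in _ (fun _ => expect k p N (fun w => INR (burgers_left_of 0 w)))).
  - apply lsum_const_seq.
  - intros j Hj. apply in_seq in Hj. apply expect_burgers_left_of_indep. lia.
Qed.

Lemma expect_merge_gain_linear k p N eps : (1 <= k)%nat -> 0 <= p <= 1 -> (1 <= N)%nat ->
  0 < eps -> eps * INR N <= expect k p N burgers_leftR ->
  eps ^ 3 / (32 * INR k ^ 3) * INR N <= expect k p (N + N) (merge_gain N).
Proof.
  intros Hk Hp HN He HD.
  assert (HK : 1 <= INR k) by (apply (le_INR 1); auto).
  assert (HNp : 1 <= INR N) by (apply (le_INR 1); auto).
  assert (HK3 : 1 <= INR k ^ 3) by (rewrite <- (pow1 3); apply pow_incr; lra).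
  set (K := INR k) in *. set (NN := INR N) in *.
  assert (HeN : 0 < eps * NN) by (apply Rmult_lt_0_compat; lra).
  pose proof (expect_burgers_left_le_fails k p N Hk Hp) as Hfails.
  destruct (Rle_dec (eps * NN / 2) (expect k p N (fun w => INR (flex_left w)))) as [HF|HF].
  - pose proof (expect_merge_gain_lower k p N burgers_left flex_left
                  (eps * NN) (eps * NN / 2) (eps * NN / 4) Hk Hp HN ltac:(lra) ltac:(lra)
                  ltac:(lra) ltac:(lra) ltac:(lra) burgers_left_le (fun w => count_if_le _ w [])
                  burgers_left_app_flex HD HF) as HM.
    fold NN in HM. eapply Rle_trans; [|exact HM].
    replace (eps * NN / 4 * (eps * NN / (2 * NN)) * (eps * NN / 2 / (2 * NN)))
      with (eps ^ 3 / 32 * NN) by (field; lra).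
    apply Rmult_le_compat_r; [lra|]. unfold Rdiv.
    apply Rmult_le_compat_l; [apply pow_le; lra|]. apply Rinv_le_contravar; lra.
  - assert (HS : eps * NN / 2 <= lsum (fun j => expect k p N (fun w => INR (orders_left_of j w)))
                                        (seq 0 k)) by lra.
    assert (Hne : seq 0 k <> []) by (destruct k; [lia|discriminate]).
    destruct (lsum_pigeonhole _ _ _ Hne HS) as (j & Hj & HO).
    rewrite length_seq in HO. fold K in HO. apply in_seq in Hj.
    assert (HB : eps * NN / K <= expect k p N (fun w => INR (burgers_left_of j w))).
    { rewrite expect_burgers_left_of_indep by lia.
      rewrite expect_burgers_left_eq in HD by auto. fold K in HD.
      apply (Rmult_le_reg_l K); [lra|].
      replace (K * (eps * NN / K)) with (eps * NN) by (field; lra). lra. }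
    assert (Hle : forall w, (burgers_left_of j w <= length w)%nat).
    { intros w. pose proof (burgers_left_of_le j w). pose proof (burgers_left_le w). lia. }
    assert (HO' : eps * NN / 2 / K <= expect k p N (fun w => INR (orders_left_of j w))) by exact HO.
    assert (HeNK : 0 <= eps * NN / K) by (apply Rle_mult_inv_pos; lra).
    assert (0 <= eps * NN / 2 / K) by (apply Rle_mult_inv_pos; lra).
    assert (0 <= eps * NN / (4 * K)) by (apply Rle_mult_inv_pos; lra).
    assert (Hth1 : eps * NN / (4 * K) <= eps * NN / K / 2).
    { replace (eps * NN / (4 * K)) with (eps * NN / K / 2 / 2) by (field; lra). lra. }
    pose proof (expect_merge_gain_lower k p N (burgers_left_of j) (orders_left_of j)
                  (eps * NN / K) (eps * NN / 2 / K) (eps * NN / (4 * K)) Hk Hp HN HeNK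
                  ltac:(lra) ltac:(lra)
                  Hth1 ltac:(right; field; lra) Hle (fun w => count_if_le _ w [])
                  (burgers_left_app_order j) HB HO') as HM.
    fold NN in HM. eapply Rle_trans; [|exact HM].
    right. field. lra.
Qed.

(* The halving recursion E U_{2N} <= 2 E U_N - kappa N, iterated along powers of
   two, would make E U_{2^i} negative. *)
Lemma expect_burgers_left_sublinear k p eps : (1 <= k)%nat -> 0 <= p <= 1 -> 0 < eps ->
  ~ (forall N, (1 <= N)%nat -> eps * INR N <= expect k p N burgers_leftR).
Proof.
  intros Hk Hp He Hall.
  assert (HK : 1 <= INR k) by (apply (le_INR 1); auto).
  set (kappa := eps ^ 3 / (32 * INR k ^ 3)).
  assert (Hkappa : 0 < kappa).
  { unfold kappa. apply Rdiv_lt_0_compat; [apply pow_lt; lra|].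
    apply Rmult_lt_0_compat; [lra|apply pow_lt; lra]. }
  assert (Hpow : forall i, (1 <= 2 ^ i)%nat) by (induction i; simpl; lia).
  assert (Hhalf : forall N, (1 <= N)%nat ->
            expect k p (N + N) burgers_leftR <= 2 * expect k p N burgers_leftR - kappa * INR N).
  { intros N HN. pose proof (expect_merge_gain_linear k p N eps Hk Hp HN He (Hall N HN)).
    rewrite expect_merge_gain in H by auto. unfold kappa. lra. }
  assert (H1 : expect k p 1 burgers_leftR <= 1).
  { rewrite <- (expect_const k p 1 1 Hk). apply expect_le; auto. intros w Hl _.
    unfold burgers_leftR. apply (le_INR _ 1). rewrite <- Hl. apply burgers_left_le. }
  assert (Hiter : forall i,
             expect k p (2 ^ i) burgers_leftR <= INR (2 ^ i) * (1 - INR i * kappa / 2)).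
  { induction i.
    - change (2 ^ 0)%nat with 1%nat.
      replace (INR 1 * (1 - INR 0 * kappa / 2)) with 1 by (simpl; lra). exact H1.
    - replace (2 ^ S i)%nat with (2 ^ i + 2 ^ i)%nat by (simpl; lia).
      pose proof (Hhalf _ (Hpow i)). rewrite plus_INR, S_INR. nra. }
  destruct (INR_archimed kappa 2 Hkappa) as [i Hi].
  specialize (Hiter i). specialize (Hall _ (Hpow i)).
  assert (1 <= INR (2 ^ i)) by (apply (le_INR 1), Hpow).
  nra.
Qed.

Lemma small_first_burger_left k p eps : (1 <= k)%nat -> 0 <= p <= 1 -> 0 < eps ->
  exists t, expect k p (S t) (fun w => INR (first_burger_left w)) < eps.
Proof.
  intros Hk Hp He. apply NNPP. intros Hn.
  apply (expect_burgers_left_sublinear k p eps Hk Hp He). intros N _.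
  induction N.
  - simpl. unfold burgers_leftR, burgers_left. simpl. lra.
  - rewrite expect_burgers_left_S, S_INR by auto.
    assert (eps <= expect k p (S N) (fun w => INR (first_burger_left w))).
    { apply Rnot_lt_le. intros H. apply Hn. eauto. }
    lra.
Qed.

Lemma small_last_order_left k p eps : (1 <= k)%nat -> 0 <= p <= 1 -> 0 < eps ->
  exists t, expect k p (S t) (fun w => INR (last_order_left w)) < eps.
Proof.
  intros Hk Hp He. apply NNPP. intros Hn.
  apply (expect_burgers_left_sublinear k p eps Hk Hp He). intros N _.
  rewrite expect_burgers_left_orders_left by auto.
  induction N.
  - simpl. unfold orders_leftR, orders_left. simpl. lra.
  - rewrite expect_orders_left_S, S_INR by auto.
    assert (eps <= expect k p (S N) (fun w => INR (last_order_left w))).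
    { apply Rnot_lt_le. intros H. apply Hn. eauto. }
    lra.
Qed.

Lemma pred_ext {O : Type} (A B : O -> Prop) : (forall w, A w <-> B w) -> A = B.
Proof.
  intros H. apply functional_extensionality. intros w. apply propositional_extensionality. auto.
Qed.

Lemma infinite_sum_eventually_const s l N0 c :
  infinite_sum s l -> (forall n, (n >= N0)%nat -> sum_f_R0 s n = c) -> l = c.
Proof.
  intros Hs Hc. apply NNPP. intros Hne.
  assert (He : Rabs (l - c) > 0) by (apply Rabs_pos_lt; lra).
  destruct (Hs _ He) as [N HN]. specialize (HN (Nat.max N N0) ltac:(lia)).
  rewrite Hc in HN by lia. unfold Rdist in HN. rewrite Rabs_minus_sym in HN. lra.
Qed.

Lemma ex_Z_ex_nat (Q : Z -> Prop) :
  (exists z, Q z) <-> exists n : nat, Q (Z.of_nat n) \/ Q (- Z.of_nat n)%Z.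
Proof.
  split; [|intros [n [H|H]]; eauto].
  intros [z Hz]. exists (Z.to_nat (Z.abs z)). destruct (Z.le_gt_cases 0 z).
  - left. replace (Z.of_nat (Z.to_nat (Z.abs z))) with z by lia. auto.
  - right. replace (- Z.of_nat (Z.to_nat (Z.abs z)))%Z with z by lia. auto.
Qed.

Section ProbabilitySpace.
Variable Omega : Type.
Variable meas : (Omega -> Prop) -> Prop.
Variable P : (Omega -> Prop) -> R.
Hypothesis HP : is_probability_space Omega meas P.

Lemma meas_ext (A B : Omega -> Prop) : (forall w, A w <-> B w) -> meas A -> meas B.
Proof. intros H HA. rewrite <- (pred_ext A B H). auto. Qed.

Lemma prob_ext (A B : Omega -> Prop) : (forall w, A w <-> B w) -> P A = P B.
Proof. intros H. rewrite (pred_ext A B H). auto. Qed.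

Lemma meas_not A : meas A -> meas (fun w => ~ A w).
Proof. destruct HP as (_ & HC & _). apply HC. Qed.

Lemma meas_ex_nat (E : nat -> Omega -> Prop) :
  (forall n, meas (E n)) -> meas (fun w => exists n, E n w).
Proof. destruct HP as (_ & _ & HU & _). apply HU. Qed.

Lemma meas_False : meas (fun _ => False).
Proof.
  destruct HP as (HT & _). apply (meas_ext (fun w => ~ (fun _ => True) w)); [tauto|].
  apply meas_not, HT.
Qed.

Lemma meas_or A B : meas A -> meas B -> meas (fun w => A w \/ B w).
Proof.
  intros HA HB.
  apply (meas_ext (fun w => exists n : nat, (match n with O => A | _ => B end) w)).
  - intros w. split; [intros [[|n] H]; auto|].
    intros [H|H]; [exists 0%nat|exists 1%nat]; auto.
  - apply meas_ex_nat. intros [|n]; auto.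
Qed.

Lemma meas_and A B : meas A -> meas B -> meas (fun w => A w /\ B w).
Proof.
  intros HA HB. apply (meas_ext (fun w => ~ (~ A w \/ ~ B w))); [intros w; tauto|].
  apply meas_not, meas_or; apply meas_not; auto.
Qed.

Lemma meas_ex_list {I : Type} (l : list I) (A : I -> Omega -> Prop) :
  (forall x, meas (A x)) -> meas (fun w => exists x, In x l /\ A x w).
Proof.
  intros HA. induction l as [|a l IH].
  - apply (meas_ext (fun _ => False)); [intros w; split; [tauto|intros (x & [] & _)]|].
    apply meas_False.
  - apply (meas_ext (fun w => A a w \/ exists x, In x l /\ A x w)).
    + intros w; split.
      * intros [H|(x & H1 & H2)]; [exists a|exists x]; simpl; auto.
      * intros (x & [<-|H1] & H2); [left; auto|right; exists x; auto].
    + apply meas_or; auto.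
Qed.

Lemma prob_nonneg A : meas A -> 0 <= P A.
Proof. destruct HP as (_ & _ & _ & Hnn & _). apply Hnn. Qed.

Lemma prob_False : P (fun _ => False) = 0.
Proof.
  pose proof meas_False as HF.
  destruct HP as (_ & _ & _ & _ & _ & Hadd).
  specialize (Hadd (fun _ _ => False) (fun _ => HF) ltac:(intros; auto)). cbv beta in Hadd.
  rewrite (prob_ext (fun w => exists n : nat, False) (fun _ => False)) in Hadd
    by (intros; split; [intros [_ []]|intros []]).
  set (c := P (fun _ => False)) in *.
  apply NNPP. intros Hc.
  assert (Hac : 0 < Rabs c) by (apply Rabs_pos_lt; auto).
  destruct (Hadd 1 ltac:(lra)) as [N HN].
  destruct (INR_archimed (Rabs c) 1 Hac) as [m Hm].
  specialize (HN (Nat.max N m) ltac:(lia)). rewrite sum_cte in HN. unfold Rdist in HN.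
  replace (c * INR (S (Nat.max N m)) - c) with (c * INR (Nat.max N m)) in HN
    by (rewrite S_INR; ring).
  rewrite Rabs_mult, (Rabs_right (INR _)) in HN by (apply Rle_ge, pos_INR).
  assert (INR m <= INR (Nat.max N m)) by (apply le_INR; lia).
  nra.
Qed.

Lemma prob_or_disjoint A B : meas A -> meas B -> (forall w, A w -> B w -> False) ->
  P (fun w => A w \/ B w) = P A + P B.
Proof.
  intros HA HB Hd. pose proof prob_False as PF. pose proof meas_False as HF.
  destruct HP as (_ & _ & _ & _ & _ & Hadd).
  set (E := fun n : nat => match n with O => A | 1%nat => B | _ => fun _ => False end).
  assert (HE : forall n, meas (E n)) by (intros [|[|n]]; simpl; auto).
  assert (Hdis : forall i j w, i <> j -> E i w -> E j w -> False).
  { intros [|[|i]] [|[|j]] w Hij; simpl; try tauto; try lia; intros; eapply Hd; eauto. }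
  specialize (Hadd E HE Hdis).
  rewrite (prob_ext (fun w => exists n, E n w) (fun w => A w \/ B w)) in Hadd.
  2:{ intros w; split.
      - intros [[|[|n]] H]; unfold E in H; tauto.
      - intros [H|H]; [exists 0%nat|exists 1%nat]; auto. }
  apply (infinite_sum_eventually_const _ _ 1 _ Hadd). intros n Hn. induction n; [lia|].
  destruct n; simpl; auto. simpl in IHn. rewrite IHn by lia. simpl. rewrite PF. lra.
Qed.

Lemma prob_mono A B : meas A -> meas B -> (forall w, A w -> B w) -> P A <= P B.
Proof.
  intros HA HB Hab.
  assert (HM : meas (fun w => B w /\ ~ A w)) by (apply meas_and; auto; apply meas_not; auto).
  rewrite (prob_ext B (fun w => A w \/ (B w /\ ~ A w))).
  - rewrite prob_or_disjoint by (auto; tauto). pose proof (prob_nonneg _ HM). lra.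
  - intros w; split; [|intros [H|H]; [apply Hab; auto|tauto]].
    intros Hb; destruct (classic (A w)); tauto.
Qed.

Lemma prob_or_le A B : meas A -> meas B -> P (fun w => A w \/ B w) <= P A + P B.
Proof.
  intros HA HB.
  assert (HM : meas (fun w => B w /\ ~ A w)) by (apply meas_and; auto; apply meas_not; auto).
  rewrite (prob_ext (fun w => A w \/ B w) (fun w => A w \/ (B w /\ ~ A w))).
  - rewrite prob_or_disjoint by (auto; tauto).
    pose proof (prob_mono _ _ HM HB (fun w H => proj1 H)). lra.
  - intros w; split; [intros [H|H]; [tauto|destruct (classic (A w)); tauto]|tauto].
Qed.

Lemma prob_not A : meas A -> P (fun w => ~ A w) = 1 - P A.
Proof.
  intros HA. pose proof (meas_not _ HA) as HnA.
  pose proof (prob_or_disjoint _ _ HA HnA ltac:(intros w a b; apply b; exact a)) as H.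
  cbv beta in H.
  rewrite (prob_ext (fun w => A w \/ ~ A w) (fun _ => True)) in H
    by (intros w; split; auto; intros _; apply classic).
  destruct HP as (_ & _ & _ & _ & H1 & _). lra.
Qed.

Lemma prob_ex_list_disjoint {I : Type} (l : list I) (A : I -> Omega -> Prop) :
  NoDup l -> (forall x, meas (A x)) -> (forall x y w, x <> y -> A x w -> A y w -> False) ->
  P (fun w => exists x, In x l /\ A x w) = lsum (fun x => P (A x)) l.
Proof.
  intros Hnd HA Hd. induction l as [|a l IH].
  - simpl. rewrite (prob_ext _ (fun _ => False)); [apply prob_False|].
    intros w; split; [intros (x & [] & _)|intros []].
  - inversion Hnd; subst. simpl.
    rewrite (prob_ext _ (fun w => A a w \/ exists x, In x l /\ A x w)).
    + rewrite prob_or_disjoint, IH; auto.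
      * apply meas_ex_list; auto.
      * intros w G1 (x & Gx & G2). apply (Hd a x w); auto. intros ->; auto.
    + intros w; split.
      * intros (x & [<-|G1] & G2); [left; auto|right; exists x; auto].
      * intros [G|(x & G1 & G2)]; [exists a|exists x]; simpl; auto.
Qed.

Lemma prob_ex_nat_null (E : nat -> Omega -> Prop) :
  (forall n, meas (E n)) -> (forall n, P (E n) = 0) -> P (fun w => exists n, E n w) = 0.
Proof.
  intros HE HZ.
  set (D := fun n w => E n w /\ ~ (exists i, In i (seq 0 n) /\ E i w)).
  assert (HD : forall n, meas (D n)).
  { intros n. apply meas_and; auto. apply meas_not, meas_ex_list; auto. }
  assert (HDz : forall n, P (D n) = 0).
  { intros n. pose proof (prob_mono _ _ (HD n) (HE n) (fun w H => proj1 H)).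
    pose proof (prob_nonneg _ (HD n)). rewrite HZ in H. lra. }
  assert (Hdis : forall i j w, i <> j -> D i w -> D j w -> False).
  { intros i j w Hij [Hi Ni] [Hj Nj]. destruct (Nat.lt_ge_cases i j).
    - apply Nj. exists i. split; auto. apply in_seq. lia.
    - apply Ni. exists j. split; auto. apply in_seq. lia. }
  destruct HP as (_ & _ & _ & _ & _ & Hadd).
  specialize (Hadd D HD Hdis).
  rewrite (prob_ext (fun w => exists n, D n w) (fun w => exists n, E n w)) in Hadd.
  - apply (infinite_sum_eventually_const _ _ 0 _ Hadd). intros n _.
    induction n; simpl; rewrite ?IHn; rewrite HDz; lra.
  - intros w; split; [intros [n [H _]]; eauto|].
    intros [n Hn]. induction n as [n IH] using (well_founded_induction lt_wf).
    destruct (classic (exists i, In i (seq 0 n) /\ E i w)) as [(i & Hi & Ei)|Hno].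
    + apply in_seq in Hi. apply (IH i); auto. lia.
    + exists n. split; auto.
Qed.

Lemma prob_forall_Z (E : Z -> Omega -> Prop) :
  (forall m, meas (E m)) -> (forall m, P (fun w => ~ E m w) = 0) ->
  meas (fun w => forall m, E m w) /\ P (fun w => forall m, E m w) = 1.
Proof.
  intros HE HE0.
  set (Bad := fun (n : nat) w => ~ E (Z.of_nat n) w \/ ~ E (- Z.of_nat n)%Z w).
  assert (HBad : forall n, meas (Bad n)) by (intros n; apply meas_or; apply meas_not; auto).
  assert (HBad0 : forall n, P (Bad n) = 0).
  { intros n. pose proof (prob_or_le _ _ (meas_not _ (HE (Z.of_nat n)))
                                         (meas_not _ (HE (- Z.of_nat n)%Z))) as H.
    rewrite !HE0 in H. pose proof (prob_nonneg _ (HBad n)). unfold Bad in *. lra. }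
  assert (Hall : forall w, (forall m, E m w) <-> ~ exists n, Bad n w).
  { intros w. pose proof (ex_Z_ex_nat (fun m => ~ E m w)) as Hex. unfold Bad. split.
    - intros H Hn. apply Hex in Hn as [m Hm]. auto.
    - intros H m. apply NNPP. intros Hm. apply H, Hex. eauto. }
  split.
  - apply (meas_ext (fun w => ~ exists n, Bad n w)); [intros; rewrite Hall; tauto|].
    apply meas_not, meas_ex_nat, HBad.
  - rewrite (prob_ext _ (fun w => ~ exists n, Bad n w)) by (intros; apply Hall).
    rewrite prob_not, prob_ex_nat_null by (auto using meas_ex_nat). lra.
Qed.

End ProbabilitySpace.

Definition theta_of_nat (n : nat) : theta :=
  match (n mod 3)%nat with 0%nat => Burger (n / 3) | 1%nat => Order (n / 3) | _ => Flex end.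

Lemma theta_of_nat_surj c : exists n, theta_of_nat n = c.
Proof.
  destruct c as [i|i|].
  - exists (3 * i)%nat. unfold theta_of_nat.
    replace ((3 * i) mod 3)%nat with 0%nat by (rewrite Nat.mul_comm, Nat.Div0.mod_mul; auto).
    rewrite Nat.mul_comm, Nat.div_mul by lia. auto.
  - exists (3 * i + 1)%nat. unfold theta_of_nat.
    replace ((3 * i + 1) mod 3)%nat with 1%nat by (apply Nat.mod_unique with i; lia).
    replace ((3 * i + 1) / 3)%nat with i by (apply Nat.div_unique with 1%nat; lia). auto.
  - exists 2%nat. reflexivity.
Qed.

Fixpoint range_from (a : Z) (n : nat) : list Z :=
  match n with O => [] | S n' => a :: range_from (a + 1)%Z n' end.

Definition letters {O : Type} (X : Z -> O -> theta) (w : O) (L : list Z) : list theta :=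
  map (fun j => X j w) L.

Lemma letters_ext {O : Type} (X : Z -> O -> theta) L w w' :
  (forall j, In j L -> X j w = X j w') -> letters X w L = letters X w' L.
Proof. intros H. apply map_ext_in. auto. Qed.

Definition word_weight k p (cs : list theta) : R := fold_right Rmult 1 (map (law k p) cs).

Section Process.
Variable Omega : Type.
Variable meas : (Omega -> Prop) -> Prop.
Variable P : (Omega -> Prop) -> R.
Hypothesis HP : is_probability_space Omega meas P.
Variables (k : nat) (p : R) (X : Z -> Omega -> theta).
Hypothesis HX : iid_with_law Omega meas P X k p.
Hypothesis Hk : (1 <= k)%nat.

(* Letters take countably many values, so an event depending on finitely many
   letters is a countable union of cylinders. *)
Lemma meas_determined L (E : Omega -> Prop) :
  (forall w w', (forall j, In j L -> X j w = X j w') -> (E w <-> E w')) -> meas E.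
Proof.
  destruct HX as (HX1 & _). revert E. induction L as [|j L IH]; intros E HE.
  - destruct (classic (exists w, E w)) as [[w0 H0]|Hn].
    + apply (meas_ext _ _ (fun _ => True)); [|destruct HP; auto].
      intros w; split; auto. intros _. apply (HE w0 w); auto. intros _ [].
    + apply (meas_ext _ _ (fun _ => False)); [|apply (meas_False _ _ P HP)].
      intros w; split; [tauto|]. intros H; apply Hn; eauto.
  - set (Ec := fun c w => exists w', X j w' = c /\ (forall i, In i L -> X i w' = X i w) /\ E w').
    assert (HEc : forall c, meas (Ec c)).
    { intros c. apply IH. intros w1 w2 Hw. unfold Ec.
      split; intros (w' & H1 & H2 & H3); exists w'; repeat split; auto;
        intros i Hi; rewrite H2, Hw; auto. }
    apply (meas_ext _ _ (fun w => exists n, X j w = theta_of_nat n /\ Ec (theta_of_nat n) w)).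
    + intros w; split.
      * intros (n & H1 & w' & H2 & H3 & H4). apply (HE w' w); auto.
        intros i [<-|Hi]; [congruence|auto].
      * intros H. destruct (theta_of_nat_surj (X j w)) as [n Hn]. exists n. split; auto.
        exists w. repeat split; auto.
    + apply (meas_ex_nat _ _ P HP). intros n. apply (meas_and _ _ P HP); auto.
Qed.

Lemma prob_letters_eq ns cs : NoDup ns -> length ns = length cs ->
  P (fun w => letters X w ns = cs) = word_weight k p cs.
Proof.
  destruct HX as (_ & HX2). intros H1 H2. unfold word_weight. rewrite <- (HX2 ns cs H1 H2).
  apply (prob_ext _ P). intros w. unfold letters. clear H2.
  revert cs. induction ns as [|n ns IH]; intros cs.
  - split; [intros <-; constructor|intros H; inversion H; auto].
  - inversion H1; subst. split.
    + intros <-. constructor; auto. apply IH; auto.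
    + intros H. inversion H; subst. simpl. f_equal. apply IH; auto.
Qed.

Lemma prob_letter_in_alphabet a : P (fun w => In (X a w) (alphabet k)) = 1.
Proof.
  rewrite (prob_ext _ P (fun w => In (X a w) (alphabet k))
                    (fun w => exists c, In c (alphabet k) /\ letters X w [a] = [c])).
  2:{ intros w; split; [intros; exists (X a w); auto|].
      intros (c & H1 & H2). inversion H2; subst; auto. }
  rewrite (prob_ex_list_disjoint _ _ P HP); auto.
  - rewrite (lsum_ext_in _ (law k p)); [apply law_sum; auto|].
    intros c _. rewrite prob_letters_eq; [unfold word_weight; simpl; lra| |reflexivity].
    repeat constructor. auto.
  - apply NoDup_alphabet.
  - intros c. apply (meas_determined [a]). intros w w' Hw.
    rewrite (letters_ext X [a] w w' Hw). tauto.
  - intros x y w Hxy H1 H2. congruence.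
Qed.

Lemma prob_split_letter a (E : Omega -> Prop) : meas E ->
  P E = lsum (fun c => P (fun w => X a w = c /\ E w)) (alphabet k).
Proof.
  intros HE.
  assert (Hin : meas (fun w => In (X a w) (alphabet k))).
  { apply (meas_determined [a]). intros w w' Hw. rewrite Hw; simpl; auto. tauto. }
  assert (Hout : meas (fun w => E w /\ ~ In (X a w) (alphabet k)))
    by (apply (meas_and _ _ P HP); auto; apply (meas_not _ _ P HP); auto).
  assert (Hc : forall c, meas (fun w => X a w = c /\ E w)).
  { intros c. apply (meas_and _ _ P HP); auto. destruct HX; auto. }
  assert (Hnull : P (fun w => E w /\ ~ In (X a w) (alphabet k)) = 0).
  { pose proof (prob_mono _ _ P HP _ _ Hout (meas_not _ _ P HP _ Hin) (fun w H => proj2 H)) as H.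
    rewrite (prob_not _ _ P HP), prob_letter_in_alphabet in H by auto.
    pose proof (prob_nonneg _ _ P HP _ Hout). lra. }
  rewrite <- (prob_ex_list_disjoint _ _ P HP)
    by (auto using NoDup_alphabet; intros ? ? ? ? [? _] [? _]; congruence).
  rewrite (prob_ext _ P E (fun w => (exists c, In c (alphabet k) /\ X a w = c /\ E w)
                                \/ (E w /\ ~ In (X a w) (alphabet k)))).
  - rewrite (prob_or_disjoint _ _ P HP), Hnull; [lra| |auto|].
    + apply (meas_ex_list _ _ P HP); auto.
    + intros w (c & Hc' & <- & _) (_ & Hn). auto.
  - intros w; split.
    + intros H. destruct (classic (In (X a w) (alphabet k))); [left; eauto|right; auto].
    + intros [(c & _ & _ & H)|[H _]]; auto.
Qed.

Lemma prob_cylinder_pattern n a ns cs (g : list theta -> bool) :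
  NoDup ns -> (forall j, In j ns -> (j < a)%Z) -> length ns = length cs ->
  P (fun w => letters X w ns = cs /\ g (letters X w (range_from a n)) = true)
  = word_weight k p cs * expect k p n (fun u => if g u then 1 else 0).
Proof.
  revert a ns cs g. induction n as [|n IH]; intros a ns cs g Hnd Hlt Hlen.
  - simpl. destruct (g []) eqn:Eg.
    + rewrite (prob_ext _ P _ (fun w => letters X w ns = cs)) by (intros w; split; [tauto|auto]).
      rewrite prob_letters_eq; auto. lra.
    + rewrite (prob_ext _ P _ (fun _ => False))
        by (intros w; split; [intros [_ H]; congruence|tauto]).
      rewrite (prob_False _ _ P HP). lra.
  - rewrite (prob_split_letter a).
    2:{ apply (meas_determined (ns ++ range_from a (S n))). intros w w' Hw.
        rewrite (letters_ext X ns w w'), (letters_ext X (range_from a (S n)) w w'); [tauto| |];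
          intros j Hj; apply Hw; apply in_app_iff; auto. }
    simpl expect. unfold word_weight. rewrite <- lsum_scal. apply lsum_ext_in. intros c _.
    assert (Hlt' : forall j, In j (a :: ns) -> (j < a + 1)%Z).
    { intros j [<-|Hj]; [lia|]. specialize (Hlt j Hj). lia. }
    assert (Hnd' : NoDup (a :: ns)).
    { constructor; auto. intros Ha. specialize (Hlt a Ha). lia. }
    pose proof (IH (a + 1)%Z (a :: ns) (c :: cs) (fun u => g (c :: u)) Hnd' Hlt'
                  ltac:(simpl; auto)) as E.
    cbv beta in E. unfold word_weight in E. simpl in E.
    rewrite <- Rmult_assoc, (Rmult_comm (fold_right _ _ _) (law k p c)).
    rewrite <- E.
    apply (prob_ext _ P). intros w. unfold letters. simpl. split.
    + intros (<- & H1 & H2). rewrite H1. auto.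
    + intros (H1 & H2). inversion H1; subst. auto.
Qed.

End Process.

Section PositionStack.
Local Open Scope Z_scope.

Lemma range_from_seq a d s :
  map (fun i => a + Z.of_nat i) (seq s d) = range_from (a + Z.of_nat s) d.
Proof. revert s; induction d; intros s; simpl; auto. f_equal. rewrite IHd. f_equal. lia. Qed.

Lemma positions_range_from a b : positions a b = range_from a (Z.to_nat (b - a)).
Proof. unfold positions. rewrite range_from_seq. f_equal. lia. Qed.

Lemma range_from_snoc a d : range_from a (S d) = range_from a d ++ [a + Z.of_nat d].
Proof.
  revert a; induction d; intros a; simpl; [f_equal; lia|].
  specialize (IHd (a + 1)). simpl in IHd. rewrite IHd. do 3 f_equal. lia.
Qed.

Definition stack_from (x : Z -> theta) (a : Z) (d : nat) : list (Z * nat) :=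
  fold_left step (map (fun j => (j, x j)) (range_from a d)) [].

Lemma stack_between_from x a b : stack_between x a b = stack_from x a (Z.to_nat (b - a)).
Proof. unfold stack_between, stack_from. rewrite positions_range_from. auto. Qed.

Lemma stack_from_S x a d :
  stack_from x a (S d) = step (stack_from x a d) (a + Z.of_nat d, x (a + Z.of_nat d)).
Proof. unfold stack_from. rewrite range_from_snoc, map_app, fold_left_app. auto. Qed.

Lemma stack_from_ext x y a d :
  (forall j, In j (range_from a d) -> x j = y j) -> stack_from x a d = stack_from y a d.
Proof. intros H. unfold stack_from. f_equal. apply map_ext_in. intros j Hj. rewrite H; auto. Qed.

Lemma remove_first_type_decomp i s j s' : remove_first_type i s = Some (j, s') ->
  exists A B, s = A ++ (j, i) :: B /\ s' = A ++ B.
Proof.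
  revert s'; induction s as [|[j0 t] s IH]; intros s' H; simpl in H; [discriminate|].
  destruct (Nat.eqb_spec t i) as [->|].
  - inversion H; subst. exists [], s'. auto.
  - destruct (remove_first_type i s) as [[j1 s1]|] eqn:E; [|discriminate]. inversion H; subst.
    destruct (IH _ eq_refl) as (A & B & -> & ->). exists ((j0, t) :: A), B. auto.
Qed.

Lemma consume_decomp c s j s' : consume c s = Some (j, s') ->
  exists A B t, s = A ++ (j, t) :: B /\ s' = A ++ B.
Proof.
  destruct c; simpl; intros H; [discriminate| |].
  - destruct (remove_first_type_decomp _ _ _ _ H) as (A & B & H1 & H2). eauto.
  - destruct s as [|[j0 t] s]; [discriminate|]. inversion H; subst. exists [], s', t. auto.
Qed.

Lemma consume_shrink c s j s' : consume c s = Some (j, s') ->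
  incl s' s /\ length s = S (length s').
Proof.
  intros H. destruct (consume_decomp _ _ _ _ H) as (A & B & t & -> & ->). split.
  - intros e. rewrite !in_app_iff. simpl. tauto.
  - rewrite !length_app. simpl. lia.
Qed.

Lemma in_step s j c e : In e (step s (j, c)) -> In e s \/ fst e = j.
Proof.
  unfold step. destruct c; [intros [<-|H]; auto| |];
    destruct (consume _ s) as [[j1 s1]|] eqn:E; auto;
    intros H; left; apply (proj1 (consume_shrink _ _ _ _ E)), H.
Qed.

Lemma step_removes s j c e :
  In e s -> ~ In e (step s (j, c)) -> exists s', consume c s = Some (fst e, s').
Proof.
  intros Hin Hout. unfold step in Hout.
  destruct c; [exfalso; apply Hout; right; auto| |];
    destruct (consume _ s) as [[j1 s1]|] eqn:E; try tauto;
    destruct (consume_decomp _ _ _ _ E) as (A & B & t & -> & ->);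
    apply in_app_iff in Hin; destruct Hin as [Hin|[<-|Hin]];
    try (exfalso; apply Hout; apply in_app_iff; tauto); simpl; eauto.
Qed.

Lemma stack_from_position x a d e : In e (stack_from x a d) -> a <= fst e < a + Z.of_nat d.
Proof.
  induction d; [simpl; tauto|]. rewrite stack_from_S. intros H.
  apply in_step in H as [H|H]; [apply IHd in H|]; lia.
Qed.

Lemma remove_first_type_app i T B : remove_first_type i (T ++ B) =
  match remove_first_type i T with
  | Some (j, T') => Some (j, T' ++ B)
  | None => match remove_first_type i B with Some (j, B') => Some (j, T ++ B') | None => None end
  end.
Proof.
  induction T as [|[j0 t] T IH]; simpl.
  - destruct (remove_first_type i B) as [[]|]; auto.
  - destruct (Nat.eqb t i); auto. rewrite IH.
    destruct (remove_first_type i T) as [[]|]; auto.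
    destruct (remove_first_type i B) as [[]|]; auto.
Qed.

Lemma consume_app c T B : consume c (T ++ B) =
  match consume c T with
  | Some (j, T') => Some (j, T' ++ B)
  | None => match consume c B with Some (j, B') => Some (j, T ++ B') | None => None end
  end.
Proof.
  destruct c; simpl; auto.
  - apply remove_first_type_app.
  - destruct T as [|[]]; simpl; auto. destruct B as [|[]]; auto.
Qed.

Lemma step_app T B j c : exists B',
  step (T ++ B) (j, c) = step T (j, c) ++ B' /\ incl B' B /\ (length B' <= length B)%nat.
Proof.
  unfold step.
  destruct c; [exists B; split; [reflexivity|split; [apply incl_refl|lia]]| |];
    rewrite consume_app; destruct (consume _ T) as [[]|];
    try (exists B; split; [reflexivity|split; [apply incl_refl|lia]]);
    destruct (consume _ B) as [[j1 B1]|] eqn:E;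
    try (exists B; split; [reflexivity|split; [apply incl_refl|lia]]).
  all: destruct (consume_shrink _ _ _ _ E) as [Hincl Hlen].
  all: exists B1; split; [reflexivity|split; [exact Hincl|lia]].
Qed.

Lemma stack_from_split x a d1 d2 : exists B',
  stack_from x a (d1 + d2) = stack_from x (a + Z.of_nat d1) d2 ++ B'
  /\ incl B' (stack_from x a d1) /\ (length B' <= length (stack_from x a d1))%nat.
Proof.
  induction d2.
  - exists (stack_from x a d1). rewrite Nat.add_0_r. split; auto. split; [apply incl_refl|lia].
  - destruct IHd2 as (B & E & H1 & H2).
    rewrite Nat.add_succ_r, stack_from_S, E, stack_from_S.
    destruct (step_app (stack_from x (a + Z.of_nat d1) d2) B (a + Z.of_nat (d1 + d2))
                (x (a + Z.of_nat (d1 + d2)))) as (B' & E' & H3 & H4).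
    exists B'. rewrite E'.
    replace (a + Z.of_nat d1 + Z.of_nat d2) with (a + Z.of_nat (d1 + d2)) by lia.
    split; auto. split; [intros e He; auto|lia].
Qed.

Lemma remove_first_type_types i s :
  remove_type i (map snd s) = option_map (fun r => map snd (snd r)) (remove_first_type i s).
Proof.
  induction s as [|[j t] s IH]; simpl; auto. destruct (Nat.eqb t i); auto. rewrite IH.
  destruct (remove_first_type i s) as [[]|]; auto.
Qed.

Lemma consume_types c s :
  consume_type c (map snd s) = option_map (fun r => map snd (snd r)) (consume c s).
Proof. destruct c; simpl; auto. apply remove_first_type_types. destruct s as [|[]]; auto. Qed.

Lemma step_types s j c : map snd (step s (j, c)) = type_step (map snd s) c.
Proof.
  unfold step, type_step.
  destruct c; auto; rewrite consume_types; destruct (consume _ s) as [[]|]; auto.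
Qed.

Lemma stack_from_types x a d : map snd (stack_from x a d) = type_run (map x (range_from a d)) [].
Proof.
  unfold stack_from. change (@nil nat) with (map snd (@nil (Z * nat))).
  generalize (@nil (Z * nat)). induction (range_from a d) as [|j l IH]; intros s; [reflexivity|].
  cbn [map fold_left]. rewrite IH, step_types. reflexivity.
Qed.

Lemma burgers_left_stack_from x a d :
  burgers_left (map x (range_from a d)) = length (stack_from x a d).
Proof. unfold burgers_left. rewrite <- stack_from_types, length_map. auto. Qed.

Lemma unmatched_burger_stays x m i : x m = Burger i -> ~ phi_finite x m ->
  forall d, In (m, i) (stack_from x m (S d)).
Proof.
  intros Hm Hnp. induction d.
  - rewrite stack_from_S. simpl. rewrite Z.add_0_r, Hm. simpl. auto.
  - destruct (classic (In (m, i) (stack_from x m (S (S d))))) as [H|H]; auto.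
    rewrite stack_from_S in H. destruct (step_removes _ _ _ _ IHd H) as [s' Hs]. simpl fst in Hs.
    exfalso. apply Hnp. exists (m + Z.of_nat (S d)). left. split; [lia|].
    rewrite stack_between_from. replace (Z.to_nat (m + Z.of_nat (S d) - m)) with (S d) by lia.
    rewrite Hs. auto.
Qed.

Lemma first_burger_left_unmatched x m i : x m = Burger i -> ~ phi_finite x m ->
  forall t, first_burger_left (map x (range_from m (S t))) = 1%nat.
Proof.
  intros Hm Hnp t.
  pose proof (unmatched_burger_stays x m i Hm Hnp t) as Hin.
  destruct (stack_from_split x m 1 t) as (B & E & H1 & H2).
  simpl plus in E. rewrite E in Hin.
  assert (HB : In (m, i) B).
  { apply in_app_iff in Hin as [H|H]; auto. apply stack_from_position in H. simpl in H. lia. }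
  assert (length (stack_from x m 1) = 1%nat)
    by (rewrite stack_from_S; simpl; rewrite Z.add_0_r, Hm; auto).
  assert (length B = 1%nat) by (destruct B; [destruct HB|]; simpl in *; lia).
  unfold first_burger_left. simpl tl. rewrite !burgers_left_stack_from, E, length_app.
  replace (m + Z.of_nat 1) with (m + 1) by lia. lia.
Qed.

Lemma unmatched_order_consumes_nothing x m t : ~ phi_finite x m ->
  consume (x m) (stack_from x (m - Z.of_nat t) t) = None.
Proof.
  intros Hnp.
  destruct (consume (x m) (stack_from x (m - Z.of_nat t) t)) as [[j s']|] eqn:E; auto. exfalso.
  destruct (consume_decomp _ _ _ _ E) as (A & C & tj & HA & _).
  assert (Hj : In (j, tj) (stack_from x (m - Z.of_nat t) t))
    by (rewrite HA; apply in_app_iff; simpl; auto).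
  apply stack_from_position in Hj. simpl in Hj.
  set (d1 := Z.to_nat (j - (m - Z.of_nat t))). set (d2 := (t - d1)%nat).
  destruct (stack_from_split x (m - Z.of_nat t) d1 d2) as (B & E2 & H1 & _).
  replace (d1 + d2)%nat with t in E2 by lia.
  replace (m - Z.of_nat t + Z.of_nat d1) with j in E2 by lia.
  rewrite E2, consume_app in E.
  destruct (consume (x m) (stack_from x j d2)) as [[j2 T']|] eqn:E3.
  - (* the burger at j is consumed by the order at m *)
    inversion E; subst j2. apply Hnp. exists j. right. split; [lia|].
    rewrite stack_between_from. replace (Z.to_nat (m - j)) with d2 by lia. rewrite E3. auto.
  - (* otherwise the consumed burger lies in the older stack, strictly before j *)
    destruct (consume (x m) B) as [[j3 B3]|] eqn:E4; [|discriminate]. inversion E; subst j3.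
    destruct (consume_decomp _ _ _ _ E4) as (A' & C' & t' & HB' & _).
    assert (In (j, t') (stack_from x (m - Z.of_nat t) d1))
      by (apply H1; rewrite HB'; apply in_app_iff; simpl; auto).
    apply stack_from_position in H. simpl in H. lia.
Qed.

Lemma last_order_left_unmatched x m : (forall i, x m <> Burger i) -> ~ phi_finite x m ->
  forall t : nat, last_order_left (map x (range_from (m - Z.of_nat t) (S t))) = 1%nat.
Proof.
  intros Hm Hnp t.
  rewrite range_from_snoc, map_app. replace (m - Z.of_nat t + Z.of_nat t) with m by lia.
  unfold last_order_left. change (map x [m]) with [x m].
  rewrite removelast_last, last_last, <- stack_from_types.
  unfold order_fails. rewrite consume_types, unmatched_order_consumes_nothing by auto.
  destruct (x m) eqn:Ex; auto. exfalso; eapply Hm; eauto.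
Qed.

End PositionStack.

Lemma matched_ext x y a b :
  (forall j, In j (b :: range_from a (Z.to_nat (b - a))) -> x j = y j) ->
  (matched x a b <-> matched y a b).
Proof.
  intros H. unfold matched. rewrite !stack_between_from, (stack_from_ext x y)
    by (intros j Hj; apply H; simpl; auto).
  rewrite (H b) by (simpl; auto). tauto.
Qed.

Section PhiFinite.
Variable Omega : Type.
Variable meas : (Omega -> Prop) -> Prop.
Variable P : (Omega -> Prop) -> R.
Hypothesis HP : is_probability_space Omega meas P.
Variables (k : nat) (p : R) (X : Z -> Omega -> theta).
Hypothesis HX : iid_with_law Omega meas P X k p.

Lemma meas_phi_finite m : meas (fun w => phi_finite (fun n => X n w) m).
Proof.
  assert (Hmatched : forall a b, meas (fun w => matched (fun n => X n w) a b)).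
  { intros a b. apply (meas_determined _ _ P HP k p X HX (b :: range_from a (Z.to_nat (b - a)))).
    intros w w' H. apply matched_ext. auto. }
  unfold phi_finite.
  apply (meas_ext _ _ (fun w => exists n : nat,
    (fun z => matched (fun n => X n w) m z \/ matched (fun n => X n w) z m) (Z.of_nat n) \/
    (fun z => matched (fun n => X n w) m z \/ matched (fun n => X n w) z m) (- Z.of_nat n)%Z)).
  - intros w. rewrite <- (ex_Z_ex_nat (fun z => matched _ m z \/ matched _ z m)). tauto.
  - apply (meas_ex_nat _ _ P HP). intros n. repeat apply (meas_or _ _ P HP); auto.
Qed.

Hypothesis Hk : (1 <= k)%nat.
Hypothesis Hp : 0 <= p <= 1.

Lemma prob_pattern a n (g : list theta -> bool) :
  P (fun w => g (letters X w (range_from a n)) = true)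
  = expect k p n (fun u => if g u then 1 else 0).
Proof.
  pose proof (prob_cylinder_pattern _ _ P HP k p X HX Hk n a [] [] g (NoDup_nil _)
                ltac:(intros _ []) eq_refl) as E.
  unfold word_weight in E. simpl in E. rewrite Rmult_1_l in E. rewrite <- E.
  apply (prob_ext _ P). intros w. unfold letters at 1. simpl. tauto.
Qed.

Lemma prob_indicator_le_expect a n (f : list theta -> nat) :
  P (fun w => Nat.eqb (f (letters X w (range_from a n))) 1 = true)
  <= expect k p n (fun u => INR (f u)).
Proof.
  pose proof (prob_pattern a n (fun u => Nat.eqb (f u) 1)) as E. cbv beta in E.
  rewrite E. apply expect_le; auto. intros u _ _.
  destruct (Nat.eqb_spec (f u) 1) as [->|]; [simpl; lra|apply pos_INR].
Qed.

(* A burger at m that is never consumed is still unconsumed t letters later; an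
   order at m that consumes nothing also finds nothing in the t letters before. *)
Lemma prob_not_phi_finite_le m t1 t2 :
  P (fun w => ~ phi_finite (fun n => X n w) m)
  <= expect k p (S t1) (fun u => INR (first_burger_left u))
     + expect k p (S t2) (fun u => INR (last_order_left u)).
Proof.
  set (BB := fun w => Nat.eqb (first_burger_left (letters X w (range_from m (S t1)))) 1 = true).
  set (BO := fun w => Nat.eqb (last_order_left
                                 (letters X w (range_from (m - Z.of_nat t2) (S t2)))) 1 = true).
  assert (MB : meas BB).
  { apply (meas_determined _ _ P HP k p X HX (range_from m (S t1))). intros w w' H. unfold BB.
    rewrite (letters_ext X (range_from m (S t1)) w w' H). tauto. }
  assert (MO : meas BO).
  { apply (meas_determined _ _ P HP k p X HX (range_from (m - Z.of_nat t2) (S t2))).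
    intros w w' H. unfold BO. rewrite (letters_ext X _ w w' H). tauto. }
  assert (Hsub : forall w, ~ phi_finite (fun n => X n w) m -> BB w \/ BO w).
  { intros w Hw. unfold BB, BO, letters. destruct (X m w) eqn:Ex.
    - left. rewrite (first_burger_left_unmatched (fun n => X n w) m n Ex Hw t1). auto.
    - right. rewrite (last_order_left_unmatched (fun n => X n w) m
                        ltac:(intros i; cbv beta; rewrite Ex; discriminate) Hw t2). auto.
    - right. rewrite (last_order_left_unmatched (fun n => X n w) m
                        ltac:(intros i; cbv beta; rewrite Ex; discriminate) Hw t2). auto. }
  pose proof (prob_mono _ _ P HP _ _ (meas_not _ _ P HP _ (meas_phi_finite m))
                (meas_or _ _ P HP _ _ MB MO) Hsub).
  pose proof (prob_or_le _ _ P HP _ _ MB MO).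
  pose proof (prob_indicator_le_expect m (S t1) first_burger_left).
  pose proof (prob_indicator_le_expect (m - Z.of_nat t2) (S t2) last_order_left).
  unfold BB, BO in *. lra.
Qed.

Lemma prob_not_phi_finite m : P (fun w => ~ phi_finite (fun n => X n w) m) = 0.
Proof.
  pose proof (prob_nonneg _ _ P HP _ (meas_not _ _ P HP _ (meas_phi_finite m))) as Hnn.
  apply NNPP. intros Hne.
  set (eps := P (fun w => ~ phi_finite (fun n => X n w) m) / 4).
  assert (He : 0 < eps) by (unfold eps; lra).
  destruct (small_first_burger_left k p eps Hk Hp He) as [t1 Ht1].
  destruct (small_last_order_left k p eps Hk Hp He) as [t2 Ht2].
  pose proof (prob_not_phi_finite_le m t1 t2). unfold eps in *. lra.
Qed.

End PhiFinite.

Theorem proposition2p1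
  (k : nat) (p : R) (Hk : (2 <= k)%nat) (Hp : 0 <= p <= 1)
  (Omega : Type) (meas : (Omega -> Prop) -> Prop) (P : (Omega -> Prop) -> R)
  (HP : is_probability_space Omega meas P)
  (X : Z -> Omega -> theta) (HX : iid_with_law Omega meas P X k p) :
  exists A : Omega -> Prop,
    meas A /\ P A = 1 /\
    forall w, A w -> forall m : Z, phi_finite (fun n => X n w) m.
Proof.
  assert (Hk1 : (1 <= k)%nat) by lia.
  destruct (prob_forall_Z _ _ P HP (fun m w => phi_finite (fun n => X n w) m)
              (meas_phi_finite _ _ P HP k p X HX)
              (prob_not_phi_finite _ _ P HP k p X HX Hk1 Hp)) as [Hmeas Hprob].
  exists (fun w => forall m, phi_finite (fun n => X n w) m). auto.
Qed.
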